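(* In the setting of the context with $q=p+\nu$, suppose that for every $i\ge1$ the point $x_i$ is a minimizer of $x\mapsto\tilde f(x;\hat x_{i-1})+\frac{L^{\alpha}}{c_q\lambda_i^{1-\alpha}\theta_2^{\alpha}q}\|x-\hat x_{i-1}\|^{q}$ and that $$0<\theta_1\le L\lambda_i\le\theta_2\le1$$ for constants $\theta_1\le\theta_2$. Then for all $k\ge1$, $$A_k\ge\frac{\theta_1c_q\gamma}{L}\Bigl(\frac{k}{p+\nu}\Bigr)^{p+\nu},\qquad f(x_k)-f(x^* )\le\frac{h(x^*;x_0)}{A_k}\le\frac{L}{\theta_1c_q\gamma}h(x^*;x_0)\Bigl(\frac{p+\nu}{k}\Bigr)^{p+\nu}.$$
   Context: Norm conventions: $\|\cdot\|$ a norm on $\mathbb{R}^d$, $\|u\|_*:=\max\{\langle u,x\rangle:\|x\|\le1\}$; for a symmetric $p$-linear form $T$, $\|T\|_*:=\max\{T[y_1,\dots,y_p]:\|y_j\|\le1\}$, $T[h]^i:=T[h,\dots,h]$; $(p,\nu,L)$-Hölder continuous derivatives means $\frac1{(p-1)!}\|\nabla^pg(x)-\nabla^pg(y)\|_*\le L\|x-y\|^\nu$ for all $x,y$; $\varphi$ is $(s,\sigma)$-uniformly convex if $\varphi(y)\ge\varphi(x)+\langle\zeta,y-x\rangle+\frac\sigma s\|y-x\|^s$ for all $y$, all $x$ with $\partial\varphi(x)\ne\emptyset$, all $\zeta\in\partial\varphi(x)$. Setting: $f=g+l$, $g:\mathbb{R}^d\to\mathbb{R}$ convex with $(p,\nu,L)$-Hölder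 continuous derivatives ($p\in\{1,2,\dots\}$, $\nu\in[0,1]$, $p+\nu\ge2$, $L>0$), $l$ proper closed convex, $x^*$ a minimizer of $f$. $\Phi_y(x):=g(y)+\sum_{i=1}^p\frac1{i!}\nabla^ig(y)[x-y]^i$, $\hat f(x;y):=g(y)+\langle\nabla g(y),x-y\rangle+l(x)$, $\tilde f(x;y):=\Phi_y(x)+l(x)$. $\gamma,\beta>0$ with $\frac1q\|\cdot\|^q$ $(q,\beta)$-uniformly convex; $c_q:=(\beta(q-1)^{1-q})^{1/q}$; $x_0\in\mathrm{dom}\,l$; $h(\cdot;x_0):\mathbb{R}^d\to\mathbb{R}$ convex, $h\ge0$, $h(x;x_0)=0$ iff $x=x_0$, $(q,\gamma)$-uniformly convex. $\alpha\in[0,1]$. $a_i>0$, $A_0:=0$, $A_i:=A_{i-1}+a_i$, $\lambda_i:=\frac{a_i^q}{c_q\gamma A_i^{q-1}}$. Iterates: $z_0:=x_0$; for $i\ge1$, $\hat x_{i-1}:=\frac{a_i}{A_i}z_{i-1}+\frac{A_{i-1}}{A_i}x_{i-1}$, $x_i$ as in the claim, $z_i:=\operatorname{argmin}_x\{\sum_{j=1}^ia_j\hat f(x;x_j)+h(x;x_0)\}$. *)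

From Stdlib Require Import Reals Lra List Permutation Arith.
Open Scope R_scope.

Definition Vec (d : nat) := Fin.t d -> R.

Definition vadd {d} (u v : Vec d) : Vec d := fun i => u i + v i.
Definition vsub {d} (u v : Vec d) : Vec d := fun i => u i - v i.
Definition vscale {d} (a : R) (u : Vec d) : Vec d := fun i => a * u i.

Fixpoint dot (d : nat) : Vec d -> Vec d -> R :=
  match d return Vec d -> Vec d -> R with
  | O => fun _ _ => 0
  | S n => fun u v => u Fin.F1 * v Fin.F1
                      + dot n (fun i => u (Fin.FS i)) (fun i => v (Fin.FS i))
  end.

(** Real power with the convention x^y = 0 for x <= 0 (used only for x >= 0, y > 0,
    and for the Hoelder exponent nu in [0,1] applied to ||x-y||). *)
Definition rpow (x y : R) : R := if Rlt_dec 0 x then Rpower x y else 0.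

Definition is_norm {d} (N : Vec d -> R) : Prop :=
  (forall x, 0 <= N x) /\
  (forall x, N x = 0 -> x = (fun _ => 0)) /\
  (forall a x, N (vscale a x) = Rabs a * N x) /\
  (forall x y, N (vadd x y) <= N x + N y).

Definition subgrad {d} (phi : Vec d -> R) (x zeta : Vec d) : Prop :=
  forall y, phi y >= phi x + dot d zeta (vsub y x).

Definition unif_convex {d} (N : Vec d -> R) (s sigma : R) (phi : Vec d -> R) : Prop :=
  forall x zeta, subgrad phi x zeta ->
    forall y, phi y >= phi x + dot d zeta (vsub y x) + sigma / s * rpow (N (vsub y x)) s.

Definition convex_fun {d} (phi : Vec d -> R) : Prop :=
  forall x y t, 0 <= t <= 1 ->
    phi (vadd (vscale t x) (vscale (1 - t) y)) <= t * phi x + (1 - t) * phi y.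

(** An extended-valued function l : R^d -> R u {+oo} is represented by its effective
    domain [dom] and its (finite) values [l] on [dom]; l = +oo outside [dom].
    Closed: the epigraph is closed. *)
Definition proper_closed_convex {d} (N : Vec d -> R) (dom : Vec d -> Prop) (l : Vec d -> R) : Prop :=
  (exists x, dom x) /\
  (forall x y t, dom x -> dom y -> 0 <= t <= 1 ->
     dom (vadd (vscale t x) (vscale (1 - t) y)) /\
     l (vadd (vscale t x) (vscale (1 - t) y)) <= t * l x + (1 - t) * l y) /\
  (forall (xs : nat -> Vec d) (ts : nat -> R) (x : Vec d) (t : R),
     (forall n, dom (xs n) /\ l (xs n) <= ts n) ->
     Un_cv (fun n => N (vsub (xs n) x)) 0 -> Un_cv ts t ->
     dom x /\ l x <= t).

(** Higher derivatives: [D i x] is the i-th derivative nabla^i g(x), a symmetric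
    i-linear form, represented as a function of a list of i vectors. *)
Definition derivs_of {d} (p : nat) (g : Vec d -> R) (D : nat -> Vec d -> list (Vec d) -> R) : Prop :=
  (forall x, D O x nil = g x) /\
  (forall i x ys ys', (i <= p)%nat -> length ys = i -> Permutation ys ys' -> D i x ys = D i x ys') /\
  (forall i x a u v ys, (1 <= i <= p)%nat -> length ys = (i - 1)%nat ->
     D i x (vadd (vscale a u) v :: ys) = a * D i x (u :: ys) + D i x (v :: ys)) /\
  (forall i x h ys, (i < p)%nat -> length ys = i ->
     derivable_pt_lim (fun t => D i (vadd x (vscale t h)) ys) 0 (D (S i) x (h :: ys))).

(** (p,nu,L)-Hoelder continuity of the p-th derivative, with the dual norm of a
    p-linear form written out:  ||T||_* <= c  iff  T[y1..yp] <= c for all ||yj|| <= 1. *)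
Definition holder_pth {d} (N : Vec d -> R) (p : nat) (nu L : R)
  (D : nat -> Vec d -> list (Vec d) -> R) : Prop :=
  forall x y ys, length ys = p -> Forall (fun v => N v <= 1) ys ->
    / INR (fact (p - 1)) * (D p x ys - D p y ys) <= L * rpow (N (vsub x y)) nu.

Definition Phi {d} (p : nat) (g : Vec d -> R) (D : nat -> Vec d -> list (Vec d) -> R)
  (y x : Vec d) : R :=
  g y + sum_f 1 p (fun i => / INR (fact i) * D i y (repeat (vsub x y) i)).

Fixpoint Asum (a : nat -> R) (k : nat) : R :=
  match k with O => 0 | S k' => Asum a k' + a k end.

Definition c_q (beta q : R) : R := rpow (beta * rpow (q - 1) (1 - q)) (1 / q).

(** The method
    keeps an estimate function [Psi_k(y) = sum_{j<=k} a_j fhat(x_j; y) + h(y)]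
    with minimizer [z_k]; [x_k] minimizes the regularized Taylor model of [f]
    around [xhat_{k-1}], a convex combination of [z_{k-1}] and [x_{k-1}].

    The proof is the estimate-sequence argument.
    - The invariant [A_k f(x_k) + gamma/q ||y - z_k||^q <= Psi_k(y)] holds for
      all [k] ([estimate_invariant]).  It propagates because [Psi_(k+1)] is
      [(q,gamma)]-uniformly convex ([unif_convex_min]) and because one step of
      the method satisfies [A_(k+1) f(x_(k+1)) <= A_k f(x_k)
      + gamma/q ||u - z_k||^q + a_(k+1) fhat(x_(k+1); u)] ([one_step]),
      whenever the regularization coefficient lies in a window
      ([step_coeff_window]).  [one_step] rests on the inequality [step_x] for
      a minimizer of the regularized Taylor model, proved from first-order
      optimality, the Taylor bound on the gradient ([grad_rem]) and a
      Young-type inequality with the constant [c_q] ([young_cq]).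
    - First-order optimality needs subgradients of finite convex functions;
      they come from a finite-dimensional Hahn-Banach theorem
      ([hahn_banach], [subgrad_dir]).
    - Since [fhat(x_j; .) <= f], the invariant at [y = xstar] gives
      [f(x_k) - f(xstar) <= h(xstar)/A_k] ([estimate_rate]); the condition
      [L lambda_i >= theta1] yields the growth [A_k >= C (k/q)^q]
      ([A_bound]). *)

From Stdlib Require Import Reals Lra List Permutation Arith Lia.
From Stdlib Require Import FunctionalExtensionality.
Open Scope R_scope.

(** ** Vectors, inner product and norms *)

Lemma vext {d} (u v : Vec d) : (forall i, u i = v i) -> u = v.
Proof. intro H; apply functional_extensionality; exact H. Qed.
Lemma dot_scale_r d (z u : Vec d) a : dot d z (vscale a u) = a * dot d z u.
Proof.
  induction d as [|n IH]; simpl; [lra|].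
  specialize (IH (fun i => z (Fin.FS i)) (fun i => u (Fin.FS i))).
  unfold vscale in *. rewrite IH. lra.
Qed.

Section Norm.
Context {d : nat} (N : Vec d -> R) (HN : is_norm N).

Lemma N_nonneg x : 0 <= N x.
Proof. destruct HN as [H _]; apply H. Qed.
Lemma N_scale a x : N (vscale a x) = Rabs a * N x.
Proof. destruct HN as [_ [_ [H _]]]; apply H. Qed.
Lemma N_tri x y : N (vadd x y) <= N x + N y.
Proof. destruct HN as [_ [_ [_ H]]]; apply H. Qed.
Lemma N_eq0 x : N x = 0 -> x = (fun _ => 0).
Proof. destruct HN as [_ [H _]]; apply H. Qed.
Lemma N_zero_vec : N (fun _ => 0) = 0.
Proof.
  replace (fun _ : Fin.t d => 0) with (vscale 0 (fun _ : Fin.t d => 0))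
    by (apply vext; intro; unfold vscale; lra).
  rewrite N_scale, Rabs_R0; lra.
Qed.

Lemma norm_decomp v : exists u, N u <= 1 /\ v = vscale (N v) u.
Proof.
  destruct (Req_dec (N v) 0) as [E|E].
  - exists (fun _ => 0). split; [rewrite N_zero_vec; lra|].
    rewrite E, (N_eq0 v E). apply vext; intro; unfold vscale; ring.
  - pose proof (N_nonneg v). exists (vscale (/ N v) v). split.
    + rewrite N_scale, Rabs_right by (left; apply Rinv_0_lt_compat; lra).
      rewrite Rinv_l by lra. lra.
    + apply vext; intro; unfold vscale. field. lra.
Qed.
End Norm.

(** ** Real powers *)

Lemma Rdiv_nonneg a b : 0 <= a -> 0 < b -> 0 <= a / b.
Proof. intros; unfold Rdiv; apply Rmult_le_pos; [auto|left; apply Rinv_0_lt_compat; auto]. Qed.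
Lemma rpow_pos_eq x y : 0 < x -> rpow x y = Rpower x y.
Proof. intro H; unfold rpow; destruct (Rlt_dec 0 x); [reflexivity|lra]. Qed.
Lemma rpow_0_l y : rpow 0 y = 0.
Proof. unfold rpow; destruct (Rlt_dec 0 0); [lra|reflexivity]. Qed.
Lemma Rpower_pos x y : 0 < Rpower x y.
Proof. unfold Rpower; apply exp_pos. Qed.
Lemma Rpower_1_base y : Rpower 1 y = 1.
Proof. unfold Rpower. rewrite ln_1, Rmult_0_r. apply exp_0. Qed.
Lemma rpow_nonneg x y : 0 <= rpow x y.
Proof. unfold rpow; destruct (Rlt_dec 0 x); [left; apply Rpower_pos|lra]. Qed.
Lemma rpow_pos x y : 0 < x -> 0 < rpow x y.
Proof. intro H; rewrite rpow_pos_eq by exact H; apply Rpower_pos. Qed.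
Lemma rpow_mult_base a b y : 0 <= a -> 0 <= b -> rpow (a * b) y = rpow a y * rpow b y.
Proof.
  intros [Ha|Ha] [Hb|Hb]; subst; rewrite ?Rmult_0_r, ?Rmult_0_l, ?rpow_0_l; try ring.
  rewrite !rpow_pos_eq by (try apply Rmult_lt_0_compat; auto). symmetry; apply Rpower_mult_distr; auto.
Qed.

Lemma rpow_plus_exp x a b : 0 < x -> rpow x (a + b) = rpow x a * rpow x b.
Proof. intro H. rewrite !rpow_pos_eq by auto. apply Rpower_plus. Qed.
Lemma rpow_1 x : 0 <= x -> rpow x 1 = x.
Proof. intros [H|H]; [rewrite rpow_pos_eq by auto; apply Rpower_1; auto|subst; apply rpow_0_l]. Qed.
Lemma rpow_le_base a b y : 0 <= y -> 0 <= a <= b -> rpow a y <= rpow b y.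
Proof.
  intros Hy [[Ha|Ha] Hab].
  - rewrite !rpow_pos_eq by lra. apply Rle_Rpower_l; lra.
  - subst. rewrite rpow_0_l. apply rpow_nonneg.
Qed.

Lemma rpow_le_one x y : 0 <= y -> 0 <= x <= 1 -> rpow x y <= 1.
Proof.
  intros Hy Hx. rewrite <- (Rpower_1_base y), <- rpow_pos_eq by lra.
  apply rpow_le_base; lra.
Qed.

Lemma rpow_inv_base x y : 0 < x -> rpow (/ x) y = / rpow x y.
Proof.
  intro H. rewrite !rpow_pos_eq by (try apply Rinv_0_lt_compat; auto).
  unfold Rpower. rewrite ln_Rinv by auto. rewrite <- exp_Ropp. f_equal; ring.
Qed.

Lemma rpow_rpow x a b : 0 <= x -> rpow (rpow x a) b = rpow x (a * b).
Proof.
  intros [H|H]; [|subst; rewrite !rpow_0_l; reflexivity].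
  rewrite (rpow_pos_eq x a), (rpow_pos_eq (Rpower x a)), rpow_pos_eq by (auto; apply Rpower_pos).
  apply Rpower_mult.
Qed.

Lemma rpow_pow_plus r k nu : 0 <= r -> rpow r nu * r ^ k = rpow r (INR k + nu).
Proof.
  intros [Hr|Hr]; [|subst; rewrite !rpow_0_l; ring].
  rewrite rpow_plus_exp, (rpow_pos_eq r (INR k)), Rpower_pow by auto. ring.
Qed.

Lemma rpow_split x th : 0 < x -> x = rpow x th * rpow x (1 - th).
Proof.
  intro Hx. rewrite <- rpow_plus_exp by lra. replace (th + (1 - th)) with 1 by ring.
  rewrite rpow_1; lra.
Qed.

(** ** Bernoulli and Young inequalities *)

(** Concave Bernoulli: [x^th <= 1 + th (x - 1)] for [0 < th <= 1], by the mean
    value theorem on [t |-> t^th] between [x] and [1]. *)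
Lemma bernoulli_concave x th : 0 <= x -> 0 < th <= 1 -> rpow x th <= 1 + th * (x - 1).
Proof.
  intros [Hx|Hx] Hth; [|subst; rewrite rpow_0_l; lra].
  rewrite rpow_pos_eq by auto.
  assert (Hder : forall c, 0 < c -> derivable_pt_lim (fun t => Rpower t th) c (th * Rpower c (th - 1)))
    by (intros; apply derivable_pt_lim_power; lra).
  destruct (Rtotal_order x 1) as [Hlt|[Heq|Hgt]].
  - destruct (MVT_cor2 _ _ x 1 Hlt (fun c Hc => Hder c ltac:(lra))) as [c [Hc Hcb]].
    rewrite Rpower_1_base in Hc.
    assert (1 <= Rpower c (th - 1)).
    { replace (th - 1) with (- (1 - th)) by ring. rewrite Rpower_Ropp, <- Rinv_1 at 1.
      apply Rinv_le_contravar; [apply Rpower_pos|].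
      assert (Hr : Rpower c (1 - th) <= Rpower 1 (1 - th)) by (apply Rle_Rpower_l; lra).
      rewrite Rpower_1_base in Hr. exact Hr. }
    assert (0 <= th * (1 - x) * (Rpower c (th - 1) - 1)) by (apply Rmult_le_pos; [apply Rmult_le_pos|]; lra).
    nra.
  - subst. rewrite Rpower_1_base. lra.
  - destruct (MVT_cor2 _ _ 1 x Hgt (fun c Hc => Hder c ltac:(lra))) as [c [Hc Hcb]].
    rewrite Rpower_1_base in Hc.
    assert (Rpower c (th - 1) <= 1).
    { assert (Hr : Rpower c (th - 1) <= Rpower c 0) by (apply Rle_Rpower; lra).
      rewrite Rpower_O in Hr by lra. exact Hr. }
    assert (0 <= th * (x - 1) * (1 - Rpower c (th - 1))) by (apply Rmult_le_pos; [apply Rmult_le_pos|]; lra).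
    nra.
Qed.

(** Convex Bernoulli: [1 + q (x - 1) <= x^q] for [q >= 1], the inverse form
    of the concave one. *)
Lemma bernoulli_convex x q : 0 <= x -> 1 <= q -> 1 + q * (x - 1) <= rpow x q.
Proof.
  intros Hx Hq.
  assert (Hiq : 0 < / q <= 1)
    by (split; [apply Rinv_0_lt_compat; lra|]; rewrite <- Rinv_1; apply Rinv_le_contravar; lra).
  pose proof (bernoulli_concave (rpow x q) (/ q) (rpow_nonneg _ _) Hiq) as H.
  rewrite rpow_rpow, Rinv_r, rpow_1 in H by lra.
  assert (H2 : q * x <= q * (1 + / q * (rpow x q - 1))) by (apply Rmult_le_compat_l; lra).
  rewrite Rmult_plus_distr_l, <- Rmult_assoc, Rinv_r in H2 by lra. lra.
Qed.

Lemma weighted_amgm A B th : 0 < A -> 0 < B -> 0 < th <= 1 ->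
  B * rpow (A / B) th <= th * A + (1 - th) * B.
Proof.
  intros HA HB Hth.
  pose proof (bernoulli_concave (A / B) th ltac:(left; apply Rdiv_lt_0_compat; lra) Hth).
  apply Rle_trans with (B * (1 + th * (A / B - 1))); [apply Rmult_le_compat_l; lra|].
  right; field; lra.
Qed.

Lemma c_q_pos beta q : 0 < beta -> 1 < q -> 0 < c_q beta q.
Proof. intros. unfold c_q. apply rpow_pos, Rmult_lt_0_compat; [lra|apply rpow_pos; lra]. Qed.
(** The constant [c_q = (beta (q-1)^(1-q))^(1/q)] is exactly the one making
    the weighted AM-GM mean of [M r^q/(q-1)] and [M beta w^q] (weights
    [(q-1)/q], [1/q]) equal to [M c_q r^(q-1) w]; checked on logarithms. *)
Lemma young_cq_identity q beta M r w : 1 < q -> 0 < beta -> 0 < M -> 0 < r -> 0 < w ->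
  M * beta * rpow w q * rpow ((M * rpow r q / (q - 1)) / (M * beta * rpow w q)) ((q - 1) / q)
  = M * c_q beta q * rpow r (q - 1) * w.
Proof.
  intros Hq Hb HM Hr Hw.
  pose proof (c_q_pos beta q Hb Hq) as Hc0.
  assert (Hwq : 0 < rpow w q) by (apply rpow_pos; lra).
  assert (HA : 0 < M * rpow r q / (q - 1)) by (apply Rdiv_lt_0_compat; [apply Rmult_lt_0_compat; [|apply rpow_pos]|]; lra).
  assert (HB : 0 < M * beta * rpow w q) by (apply Rmult_lt_0_compat; nra).
  apply ln_inv.
  - apply Rmult_lt_0_compat; [lra|apply rpow_pos, Rdiv_lt_0_compat; lra].
  - repeat apply Rmult_lt_0_compat; try lra; apply rpow_pos; lra.
  - set (A := M * rpow r q / (q - 1)) in *. set (B := M * beta * rpow w q) in *.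
    assert (LB : ln B = ln M + ln beta + q * ln w).
    { unfold B. rewrite rpow_pos_eq, !ln_mult, ln_Rpower by (try apply Rpower_pos; nra). ring. }
    assert (LA : ln A = ln M + q * ln r - ln (q - 1)).
    { unfold A, Rdiv. rewrite rpow_pos_eq by lra.
      rewrite !ln_mult, ln_Rinv, ln_Rpower
        by (try apply Rinv_0_lt_compat; try apply Rmult_lt_0_compat; try apply Rpower_pos; lra).
      ring. }
    assert (LL : ln (B * rpow (A / B) ((q - 1) / q)) = ln B + (q - 1) / q * (ln A - ln B)).
    { rewrite rpow_pos_eq by (apply Rdiv_lt_0_compat; lra).
      assert (HiB : 0 < / B) by (apply Rinv_0_lt_compat; lra).
      unfold Rdiv at 1.
      rewrite ln_mult, ln_Rpower, ln_mult, ln_Rinv by (try apply Rpower_pos; nra).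
      ring. }
    assert (Lc : ln (c_q beta q) = / q * (ln beta + (1 - q) * ln (q - 1))).
    { unfold c_q. rewrite (rpow_pos_eq (q - 1)), rpow_pos_eq
        by (try apply Rmult_lt_0_compat; try apply Rpower_pos; lra).
      rewrite ln_Rpower, ln_mult, ln_Rpower by (try apply Rpower_pos; lra). unfold Rdiv. ring. }
    assert (LR : ln (M * c_q beta q * rpow r (q - 1) * w)
                 = ln M + ln (c_q beta q) + (q - 1) * ln r + ln w).
    { rewrite (rpow_pos_eq r) by lra.
      rewrite !ln_mult, ln_Rpower by (try apply Rmult_lt_0_compat; try apply Rmult_lt_0_compat; try apply Rpower_pos; lra).
      ring. }
    rewrite LL, LR, Lc, LA, LB. field. lra.
Qed.

Lemma young_cq q beta M L r w :
  1 < q -> 0 < beta -> 0 < M -> 0 <= L -> 0 <= r -> 0 <= w ->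
  L <= M * c_q beta q ->
  L * rpow r (q - 1) * w <= M / q * (rpow r q + beta * rpow w q).
Proof.
  intros Hq Hb HM HL Hr Hw Hc.
  assert (Hrhs : 0 <= M / q * (rpow r q + beta * rpow w q)).
  { apply Rmult_le_pos; [left; apply Rdiv_lt_0_compat; lra|].
    pose proof (rpow_nonneg r q); pose proof (rpow_nonneg w q); nra. }
  destruct Hr as [Hr|Hr]; [|subst; rewrite rpow_0_l; lra].
  destruct Hw as [Hw|Hw]; [|subst; lra].
  set (A := M * rpow r q / (q - 1)). set (B := M * beta * rpow w q).
  assert (HA : 0 < A) by (apply Rdiv_lt_0_compat; [apply Rmult_lt_0_compat; [|apply rpow_pos]|]; lra).
  assert (HB : 0 < B) by (apply Rmult_lt_0_compat; [nra|apply rpow_pos; lra]).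
  assert (Hth : 0 < (q - 1) / q <= 1)
    by (split; [apply Rdiv_lt_0_compat; lra|apply Rmult_le_reg_r with q; [lra|]; unfold Rdiv;
        rewrite Rmult_assoc, Rinv_l by lra; lra]).
  pose proof (weighted_amgm A B _ HA HB Hth) as Hmean.
  unfold A, B in Hmean. rewrite young_cq_identity in Hmean by lra.
  replace ((q - 1) / q * (M * rpow r q / (q - 1)) + (1 - (q - 1) / q) * (M * beta * rpow w q))
    with (M / q * (rpow r q + beta * rpow w q)) in Hmean by (field; lra).
  eapply Rle_trans; [|exact Hmean].
  assert (0 < rpow r (q - 1) * w) by (apply Rmult_lt_0_compat; [apply rpow_pos|]; lra).
  replace (M * c_q beta q * rpow r (q - 1) * w) with (M * c_q beta q * (rpow r (q - 1) * w)) by ring.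
  rewrite Rmult_assoc. apply Rmult_le_compat_r; lra.
Qed.

(** ** Growth of the weights [A_k] *)

Lemma Asum_pos a k : (forall i, (1 <= i)%nat -> 0 < a i) -> (1 <= k)%nat -> 0 < Asum a k.
Proof.
  intros Ha Hk. induction k as [|[|k] IH]; [lia|simpl; specialize (Ha 1%nat (le_n _)); lra|].
  simpl Asum. specialize (IH ltac:(lia)). specialize (Ha (S (S k)) ltac:(lia)). simpl in IH. lra.
Qed.

Lemma Asum_nonneg a k : (forall i, (1 <= i)%nat -> 0 < a i) -> 0 <= Asum a k.
Proof. intros Ha. destruct k as [|k]; [simpl; lra|]. left; apply Asum_pos; auto; lia. Qed.
(** If [C A_i^(q-1) <= a_i^q], then [A_i^(1/q)] grows by at least
    [C^(1/q)/q] at each step: concavity of [t |-> t^(1/q)] gives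
    [A_(i-1)^(1/q) <= A_i^(1/q) (1 - a_i/(q A_i))]. *)
Lemma A_step (a : nat -> R) (q C : R) (i : nat) :
  1 < q -> 0 < C -> (forall j, (1 <= j)%nat -> 0 < a j) -> (1 <= i)%nat ->
  C * rpow (Asum a i) (q - 1) <= rpow (a i) q ->
  rpow (Asum a (i - 1)) (/ q) + rpow C (/ q) / q <= rpow (Asum a i) (/ q).
Proof.
  intros Hq HC Ha Hi Hc.
  destruct i as [|i]; [lia|]. replace (S i - 1)%nat with i by lia.
  set (B := Asum a i). set (Ai := Asum a (S i)). set (ai := a (S i)).
  assert (HAi : Ai = B + ai) by reflexivity.
  assert (Hai : 0 < ai) by (apply Ha; lia).
  assert (HB : 0 <= B) by (apply Asum_nonneg; auto).
  assert (Hiq : 0 < / q <= 1)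
    by (split; [apply Rinv_0_lt_compat; lra|]; rewrite <- Rinv_1; apply Rinv_le_contravar; lra).
  assert (Hlow : rpow C (/ q) * rpow Ai ((q - 1) / q) <= ai).
  { assert (Hm : rpow (C * rpow Ai (q - 1)) (/ q) <= rpow (rpow ai q) (/ q)).
    { apply rpow_le_base; [lra|]. split; [|exact Hc]. apply Rmult_le_pos; [lra|apply rpow_nonneg]. }
    rewrite rpow_rpow, Rinv_r, rpow_1, rpow_mult_base, rpow_rpow in Hm
      by (try apply rpow_nonneg; lra).
    exact Hm. }
  pose proof (bernoulli_concave (B / Ai) (/ q) ltac:(apply Rdiv_nonneg; lra) Hiq) as Hb.
  unfold Rdiv in Hb. rewrite rpow_mult_base, rpow_inv_base in Hb
    by (try lra; left; apply Rinv_0_lt_compat; lra).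
  assert (HP : 0 < rpow Ai (/ q)) by (apply rpow_pos; lra).
  assert (Hb2 : rpow B (/ q) <= rpow Ai (/ q) - / q * (ai * (rpow Ai (/ q) * / Ai))).
  { apply (Rmult_le_compat_l (rpow Ai (/ q))) in Hb; [|lra].
    rewrite <- Rmult_assoc, (Rmult_comm (rpow Ai (/q))), Rmult_assoc, Rinv_r, Rmult_1_r in Hb by lra.
    eapply Rle_trans; [exact Hb|]. right. rewrite HAi. field. lra. }
  assert (Hrel : rpow Ai (/ q) * / Ai * rpow Ai ((q - 1) / q) = 1).
  { replace (rpow Ai (/ q) * / Ai * rpow Ai ((q - 1) / q))
      with (rpow Ai (/ q) * rpow Ai ((q - 1) / q) * / Ai) by ring.
    rewrite <- rpow_plus_exp by lra.
    replace (/ q + (q - 1) / q) with 1 by (field; lra). rewrite rpow_1 by lra. field; lra. }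
  assert (Hgain : rpow C (/ q) / q <= / q * (ai * (rpow Ai (/ q) * / Ai))).
  { apply Rle_trans with (/ q * (rpow C (/ q) * rpow Ai ((q - 1) / q) * (rpow Ai (/ q) * / Ai))).
    - right. replace (rpow C (/ q) * rpow Ai ((q - 1) / q) * (rpow Ai (/ q) * / Ai))
        with (rpow C (/ q) * (rpow Ai (/ q) * / Ai * rpow Ai ((q - 1) / q))) by ring.
      rewrite Hrel. unfold Rdiv. ring.
    - apply Rmult_le_compat_l; [lra|]. apply Rmult_le_compat_r; [|exact Hlow].
      apply Rmult_le_pos; [lra|left; apply Rinv_0_lt_compat; lra]. }
  lra.
Qed.

Lemma A_bound (a : nat -> R) (q C : R) :
  1 < q -> 0 < C -> (forall j, (1 <= j)%nat -> 0 < a j) ->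
  (forall i, (1 <= i)%nat -> C * rpow (Asum a i) (q - 1) <= rpow (a i) q) ->
  forall k, Asum a k >= C * rpow (INR k / q) q.
Proof.
  intros Hq HC Ha Hs.
  assert (Hind : forall k, INR k * (rpow C (/ q) / q) <= rpow (Asum a k) (/ q)).
  { induction k as [|k IH].
    - simpl. rewrite Rmult_0_l. apply rpow_nonneg.
    - pose proof (A_step a q C (S k) Hq HC Ha ltac:(lia) (Hs (S k) ltac:(lia))) as H.
      replace (S k - 1)%nat with k in H by lia. rewrite S_INR. lra. }
  intro k. specialize (Hind k).
  assert (HE : 0 <= INR k * (rpow C (/ q) / q))
    by (apply Rmult_le_pos; [apply pos_INR|apply Rdiv_nonneg; [apply rpow_nonneg|lra]]).
  assert (Hm : rpow (INR k * (rpow C (/ q) / q)) q <= rpow (rpow (Asum a k) (/ q)) q)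
    by (apply rpow_le_base; lra).
  rewrite rpow_rpow, Rinv_l, rpow_1 in Hm by (try apply Asum_nonneg; auto; lra).
  apply Rle_ge. eapply Rle_trans; [|exact Hm]. right.
  replace (INR k * (rpow C (/ q) / q)) with (rpow C (/ q) * (INR k / q)) by (field; lra).
  rewrite rpow_mult_base, rpow_rpow, Rinv_l, rpow_1
    by (try apply rpow_nonneg; try apply Rdiv_nonneg; try apply pos_INR; lra).
  reflexivity.
Qed.

(** ** Subgradients of finite convex functions

    A finite convex function on [R^d] has a subgradient at every point, and one
    can be chosen to attain the directional derivative in a prescribed
    direction.  This follows from a finite-dimensional Hahn-Banach theorem for
    the (sublinear) directional derivative, proved by induction on [d]. *)

Lemma inf_exists {I : Type} (F : I -> R) :
  (exists lb, forall i, lb <= F i) -> inhabited I ->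
  {m | (forall i, m <= F i) /\ (forall m', (forall i, m' <= F i) -> m' <= m)}.
Proof.
  intros Hlb Hinh.
  destruct (completeness (fun y => exists i, y = - F i)) as [m0 [Hub Hl]].
  - destruct Hlb as [lb Hlb]. exists (- lb). intros y [i ->]. specialize (Hlb i). lra.
  - destruct Hinh as [i]. exists (- F i), i. reflexivity.
  - exists (- m0). split.
    + intro i. assert (- F i <= m0) by (apply Hub; exists i; reflexivity). lra.
    + intros m' Hm'. assert (m0 <= - m') by (apply Hl; intros y [i ->]; specialize (Hm' i); lra). lra.
Qed.

Lemma inf_fun_exists {X : Type} (P : R -> Prop) (F : X -> R -> R) (t0 : R) :
  P t0 ->
  (forall v, exists lb, forall t, P t -> lb <= F v t) ->
  exists r : X -> R,
    (forall v t, P t -> r v <= F v t) /\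
    (forall v m, (forall t, P t -> m <= F v t) -> m <= r v).
Proof.
  intros HP0 Hlb.
  assert (Hinh : inhabited {t | P t}) by (constructor; exists t0; exact HP0).
  assert (Hlb' : forall v, exists lb, forall t : {t | P t}, lb <= F v (proj1_sig t))
    by (intro v; destruct (Hlb v) as [lb Hl]; exists lb; intros [t Ht]; apply Hl, Ht).
  exists (fun v => proj1_sig (inf_exists _ (Hlb' v) Hinh)). split.
  - intros v t Ht. cbv beta. destruct (inf_exists _ _ _) as [m [Hm1 Hm2]].
    exact (Hm1 (exist _ t Ht)).
  - intros v m Hm. cbv beta. destruct (inf_exists _ _ _) as [m0 [Hm1 Hm2]]. simpl.
    apply Hm2. intros [t Ht]. apply Hm, Ht.
Qed.

Definition sublinear {d} (p : Vec d -> R) : Prop :=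
  (forall a v, 0 < a -> p (vscale a v) = a * p v) /\ (forall u v, p (vadd u v) <= p u + p v).

Lemma sublin_zero {d} (p : Vec d -> R) : sublinear p -> p (fun _ => 0) = 0.
Proof.
  intros [Hh _]. specialize (Hh 2 (fun _ => 0) ltac:(lra)).
  replace (vscale 2 (fun _ : Fin.t d => 0)) with (fun _ : Fin.t d => 0) in Hh
    by (apply vext; intro; unfold vscale; lra).
  lra.
Qed.

Lemma sublin_neg_lb {d} (p : Vec d -> R) : sublinear p -> forall v, - p (vscale (-1) v) <= p v.
Proof.
  intros Hp v. pose proof (proj2 Hp v (vscale (-1) v)) as H.
  replace (vadd v (vscale (-1) v)) with (fun _ : Fin.t d => 0) in H
    by (apply vext; intro; unfold vadd, vscale; lra).
  rewrite sublin_zero in H by auto. lra.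
Qed.

Definition vcons {n} (a : R) (v : Vec n) : Vec (S n) :=
  fun i => Fin.caseS' i (fun _ => R) a (fun j => v j).

Lemma vcons_eta {n} (v : Vec (S n)) : vcons (v Fin.F1) (fun j => v (Fin.FS j)) = v.
Proof.
  apply vext; intro i.
  apply (Fin.caseS' i (fun i => vcons (v Fin.F1) (fun j => v (Fin.FS j)) i = v i)); reflexivity.
Qed.

Lemma vcons_add {n} a b (u v : Vec n) : vadd (vcons a u) (vcons b v) = vcons (a + b) (vadd u v).
Proof.
  apply vext; intro i.
  apply (Fin.caseS' i (fun i => vadd (vcons a u) (vcons b v) i = vcons (a + b) (vadd u v) i)); reflexivity.
Qed.

Lemma vcons_scale {n} k a (u : Vec n) : vscale k (vcons a u) = vcons (k * a) (vscale k u).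
Proof.
  apply vext; intro i.
  apply (Fin.caseS' i (fun i => vscale k (vcons a u) i = vcons (k * a) (vscale k u) i)); reflexivity.
Qed.

Lemma dot_vcons {n} c z a v : dot (S n) (vcons c z) (vcons a v) = c * a + dot n z v.
Proof. reflexivity. Qed.
Lemma inf_sublinear {n} (P : R -> Prop) (F : Vec n -> R -> R) :
  P 0 -> (forall a t, 0 < a -> P t -> P (a * t)) -> (forall s t, P s -> P t -> P (s + t)) ->
  (forall a v t, 0 < a -> F (vscale a v) (a * t) = a * F v t) ->
  (forall u v s t, F (vadd u v) (s + t) <= F u s + F v t) ->
  (forall v, exists lb, forall t, P t -> lb <= F v t) ->
  exists r : Vec n -> R, sublinear r /\ forall v t, P t -> r v <= F v t.
Proof.
  intros HP0 HPscale HPadd HFscale HFadd Hlb.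
  destruct (inf_fun_exists P F 0 HP0 Hlb) as [r [Hr1 Hr2]].
  exists r. split; [|exact Hr1]. split.
  - intros a v Ha. apply Rle_antisym.
    + (* [r(a v) <= F(a v, a t) = a F(v, t)] for every admissible [t] *)
      assert (H : r (vscale a v) / a <= r v).
      { apply Hr2. intros t Ht. specialize (Hr1 (vscale a v) (a * t) (HPscale a t Ha Ht)).
        rewrite HFscale in Hr1 by lra.
        apply (Rmult_le_reg_l a); [lra|]. unfold Rdiv. field_simplify; [|lra]. nra. }
      unfold Rdiv in H. apply (Rmult_le_compat_l a) in H; [|lra].
      rewrite <- Rmult_assoc, (Rmult_comm a), Rmult_assoc, Rinv_r, Rmult_1_r in H by lra. exact H.
    + (* [a r(v) <= a F(v, t/a) = F(a v, t)] *)
      apply Hr2. intros t Ht.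
      assert (Hta : P (/ a * t)) by (apply HPscale; [apply Rinv_0_lt_compat; lra|exact Ht]).
      specialize (Hr1 v (/ a * t) Hta).
      replace t with (a * (/ a * t)) at 1 by (field; lra).
      rewrite HFscale by lra. apply Rmult_le_compat_l; lra.
  - intros u v.
    assert (H : forall s t, P s -> P t -> r (vadd u v) <= F u s + F v t).
    { intros s t Hs Ht. specialize (Hr1 (vadd u v) (s + t) (HPadd s t Hs Ht)).
      pose proof (HFadd u v s t). lra. }
    assert (H2 : forall t, P t -> r (vadd u v) - F v t <= r u).
    { intros t Ht. apply Hr2. intros s Hs. specialize (H s t Hs Ht). lra. }
    assert (H3 : r (vadd u v) - r u <= r v) by (apply Hr2; intros t Ht; specialize (H2 t Ht); lra).
    lra.
Qed.

(** Eliminating the first coordinate: for [p] sublinear on [R^(n+1)] and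
    [c = p(e_1)], the partial infimum [r(v) = inf_t p(t, v) - c t] is a
    sublinear function on [R^n]. *)
Lemma sublinear_slice n (p : Vec (S n) -> R) : sublinear p ->
  exists r : Vec n -> R, sublinear r /\
    forall v t, r v <= p (vcons t v) - p (vcons 1 (fun _ => 0)) * t.
Proof.
  intros Hp.
  set (e := vcons 1 (fun _ : Fin.t n => 0)). set (c := p e).
  assert (Hte : forall t, c * t <= p (vscale t e)).
  { intro t. destruct (Rtotal_order t 0) as [Ht|[Ht|Ht]].
    - replace (vscale t e) with (vscale (- t) (vscale (-1) e)) by (apply vext; intro; unfold vscale; lra).
      rewrite (proj1 Hp) by lra. pose proof (sublin_neg_lb p Hp e). fold c in H. nra.
    - subst. replace (vscale 0 e) with (fun _ : Fin.t (S n) => 0) by (apply vext; intro; unfold vscale; lra).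
      rewrite sublin_zero by auto. lra.
    - rewrite (proj1 Hp) by lra. fold c. lra. }
  assert (Hinf : exists r : Vec n -> R, sublinear r /\ forall v t, True -> r v <= p (vcons t v) - c * t).
  { apply inf_sublinear; [exact I|intros; exact I|intros; exact I| | |].
    - intros a v t Ha. rewrite <- vcons_scale, (proj1 Hp) by lra. ring.
    - intros u v s t. rewrite <- vcons_add. pose proof (proj2 Hp (vcons s u) (vcons t v)). lra.
    - (* [p(t, v) - c t >= -p(0, -v)], from subadditivity and [p(t e) >= c t] *)
      intro v. exists (- p (vcons 0 (vscale (-1) v))). intros t _.
      pose proof (proj2 Hp (vcons t v) (vcons 0 (vscale (-1) v))) as H.
      rewrite vcons_add in H.
      replace (vcons (t + 0) (vadd v (vscale (-1) v))) with (vscale t e) in H.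
      + specialize (Hte t). lra.
      + unfold e. rewrite vcons_scale. f_equal; [ring|]. apply vext; intro; unfold vadd, vscale; lra. }
  destruct Hinf as [r [Hrs Hr]]. exists r. split; [exact Hrs|]. intros v t. apply Hr. exact I.
Qed.

Lemma minorant : forall d (p : Vec d -> R), sublinear p -> exists z, forall v, dot d z v <= p v.
Proof.
  induction d as [|n IH]; intros p Hp.
  - exists (fun _ => 0). intro v. simpl.
    replace v with (fun _ : Fin.t 0 => 0) by (apply vext; intro i; apply (Fin.case0 (fun _ => _) i)).
    rewrite sublin_zero by auto. lra.
  - destruct (sublinear_slice n p Hp) as [r [Hrs Hr]].
    destruct (IH r Hrs) as [z' Hz'].
    exists (vcons (p (vcons 1 (fun _ => 0))) z'). intro v.
    rewrite <- (vcons_eta v), dot_vcons.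
    specialize (Hz' (fun j => v (Fin.FS j))). specialize (Hr (fun j => v (Fin.FS j)) (v Fin.F1)).
    lra.
Qed.

(** Reduction to [minorant] that keeps the value at [w]: the function
    [r(v) = inf_(t >= 0) p(v + t w) - t p(w)] is sublinear. *)
Lemma sublinear_along d (p : Vec d -> R) (w : Vec d) : sublinear p ->
  exists r : Vec d -> R, sublinear r /\
    forall v t, 0 <= t -> r v <= p (vadd v (vscale t w)) - t * p w.
Proof.
  intro Hp.
  apply (inf_sublinear (fun t => 0 <= t) (fun v t => p (vadd v (vscale t w)) - t * p w));
    [lra|intros; nra|intros; lra| | |].
  - intros a v t Ha.
    replace (vadd (vscale a v) (vscale (a * t) w)) with (vscale a (vadd v (vscale t w)))
      by (apply vext; intro; unfold vadd, vscale; ring).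
    rewrite (proj1 Hp) by lra. ring.
  - intros u v s t.
    replace (vadd (vadd u v) (vscale (s + t) w)) with (vadd (vadd u (vscale s w)) (vadd v (vscale t w)))
      by (apply vext; intro; unfold vadd, vscale; ring).
    pose proof (proj2 Hp (vadd u (vscale s w)) (vadd v (vscale t w))). lra.
  -
    intro v. exists (- p (vscale (-1) v)). intros t Ht.
    pose proof (proj2 Hp (vadd v (vscale t w)) (vscale (-1) v)) as H.
    replace (vadd (vadd v (vscale t w)) (vscale (-1) v)) with (vscale t w) in H
      by (apply vext; intro; unfold vadd, vscale; lra).
    destruct Ht as [Ht|Ht].
    + rewrite (proj1 Hp) in H by auto. lra.
    + subst. replace (vscale 0 w) with (fun _ : Fin.t d => 0) in H |- *
        by (apply vext; intro; unfold vscale; lra).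
      rewrite sublin_zero in H by auto. lra.
Qed.

Lemma hahn_banach d (p : Vec d -> R) (w : Vec d) :
  sublinear p -> exists z, (forall v, dot d z v <= p v) /\ dot d z w = p w.
Proof.
  intro Hp.
  destruct (sublinear_along d p w Hp) as [r [Hrs Hr]].
  destruct (minorant d r Hrs) as [z Hz].
  assert (Hrp : forall v, r v <= p v).
  { intro v. specialize (Hr v 0 ltac:(lra)).
    replace (vadd v (vscale 0 w)) with v in Hr by (apply vext; intro; unfold vadd, vscale; ring). lra. }
  exists z. split.
  - intro v. specialize (Hz v). specialize (Hrp v). lra.
  - apply Rle_antisym.
    + specialize (Hz w). specialize (Hrp w). lra.
    + specialize (Hz (vscale (-1) w)). rewrite dot_scale_r in Hz.
      specialize (Hr (vscale (-1) w) 1 ltac:(lra)).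
      replace (vadd (vscale (-1) w) (vscale 1 w)) with (fun _ : Fin.t d => 0) in Hr
        by (apply vext; intro; unfold vadd, vscale; ring).
      rewrite sublin_zero in Hr by auto. lra.
Qed.

Section DirectionalDerivative.
Context {d : nat} (F : Vec d -> R) (HF : convex_fun F) (z : Vec d).

Definition Qt (v : Vec d) (t : R) := (F (vadd z (vscale t v)) - F z) / t.

Lemma Qt_mono v s t : 0 < s <= t -> Qt v s <= Qt v t.
Proof.
  intros [Hs Hst]. unfold Qt.
  assert (Hst1 : 0 <= s / t <= 1).
  { split; [apply Rdiv_nonneg; lra|].
    apply (Rmult_le_reg_r t); [lra|]. unfold Rdiv. rewrite Rmult_assoc, Rinv_l by lra. lra. }
  pose proof (HF (vadd z (vscale t v)) z (s / t) Hst1) as H.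
  replace (vadd (vscale (s / t) (vadd z (vscale t v))) (vscale (1 - s / t) z)) with (vadd z (vscale s v)) in H
    by (apply vext; intro; unfold vadd, vscale; field; lra).
  apply (Rmult_le_reg_r s); [lra|]. unfold Rdiv at 1. rewrite Rmult_assoc, Rinv_l, Rmult_1_r by lra.
  replace ((F (vadd z (vscale t v)) - F z) / t * s) with (s / t * (F (vadd z (vscale t v)) - F z)) by (field; lra).
  lra.
Qed.

(** Difference quotients in opposite directions have nonnegative sum, so the
    quotients are bounded below. *)
Lemma Qt_neg v t : 0 < t -> 0 <= Qt v t + Qt (vscale (-1) v) t.
Proof.
  intro Ht. unfold Qt.
  pose proof (HF (vadd z (vscale t v)) (vadd z (vscale t (vscale (-1) v))) (1/2) ltac:(lra)) as H.
  replace (vadd (vscale (1 / 2) (vadd z (vscale t v))) (vscale (1 - 1 / 2) (vadd z (vscale t (vscale (-1) v)))))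
    with z in H by (apply vext; intro; unfold vadd, vscale; field).
  replace ((F (vadd z (vscale t v)) - F z) / t + (F (vadd z (vscale t (vscale (-1) v))) - F z) / t)
    with ((F (vadd z (vscale t v)) + F (vadd z (vscale t (vscale (-1) v))) - 2 * F z) / t) by (field; lra).
  apply Rdiv_nonneg; lra.
Qed.

Lemma Qt_lb v : exists lb, forall t, 0 < t -> lb <= Qt v t.
Proof.
  exists (Rmin (Qt v 1) (- Qt (vscale (-1) v) 1)). intros t Ht.
  destruct (Rle_dec t 1).
  - pose proof (Qt_neg v t Ht). pose proof (Qt_mono (vscale (-1) v) t 1 ltac:(lra)).
    apply Rle_trans with (- Qt (vscale (-1) v) 1); [apply Rmin_r|lra].
  - pose proof (Qt_mono v 1 t ltac:(lra)). apply Rle_trans with (Qt v 1); [apply Rmin_l|lra].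
Qed.

Lemma Qt_scale a v t : 0 < a -> 0 < t -> Qt (vscale a v) t = a * Qt v (a * t).
Proof.
  intros Ha Ht. unfold Qt.
  replace (vscale t (vscale a v)) with (vscale (a * t) v) by (apply vext; intro; unfold vscale; ring).
  field; lra.
Qed.

Lemma Qt_add u v t : 0 < t -> Qt (vadd u v) t <= Qt u (2 * t) + Qt v (2 * t).
Proof.
  intro Ht. unfold Qt.
  pose proof (HF (vadd z (vscale (2 * t) u)) (vadd z (vscale (2 * t) v)) (1/2) ltac:(lra)) as H.
  replace (vadd (vscale (1 / 2) (vadd z (vscale (2 * t) u))) (vscale (1 - 1 / 2) (vadd z (vscale (2 * t) v))))
    with (vadd z (vscale t (vadd u v))) in H by (apply vext; intro; unfold vadd, vscale; field).
  replace ((F (vadd z (vscale (2 * t) u)) - F z) / (2 * t) + (F (vadd z (vscale (2 * t) v)) - F z) / (2 * t))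
    with ((1/2 * F (vadd z (vscale (2 * t) u)) + (1 - 1/2) * F (vadd z (vscale (2 * t) v)) - F z) / t)
    by (field; lra).
  unfold Rdiv. apply Rmult_le_compat_r; [left; apply Rinv_0_lt_compat; lra|]. lra.
Qed.

Lemma dir_deriv_sublinear : exists dd : Vec d -> R,
  sublinear dd /\ (forall v t, 0 < t -> dd v <= Qt v t) /\
  (forall v m, (forall t, 0 < t -> m <= Qt v t) -> m <= dd v).
Proof.
  destruct (inf_fun_exists (fun t => 0 < t) Qt 1 Rlt_0_1 Qt_lb) as [dd [dd1 dd2]].
  exists dd. split; [|split; assumption].
  split.
  - intros a v Ha. apply Rle_antisym.
    + assert (H : dd (vscale a v) / a <= dd v).
      { apply dd2. intros t Ht. pose proof (dd1 (vscale a v) (t / a) ltac:(apply Rdiv_lt_0_compat; lra)) as H.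
        rewrite Qt_scale in H by (try apply Rdiv_lt_0_compat; lra).
        replace (a * (t / a)) with t in H by (field; lra).
        apply (Rmult_le_reg_l a); [lra|]. unfold Rdiv. field_simplify; [|lra]. lra. }
      unfold Rdiv in H. apply (Rmult_le_compat_l a) in H; [|lra].
      rewrite <- Rmult_assoc, (Rmult_comm a), Rmult_assoc, Rinv_r, Rmult_1_r in H by lra. exact H.
    + apply dd2. intros t Ht. rewrite Qt_scale by lra.
      apply Rmult_le_compat_l; [lra|]. apply dd1. nra.
  - intros u v.
    assert (H : forall s1 s2, 0 < s1 -> 0 < s2 -> dd (vadd u v) <= Qt u s1 + Qt v s2).
    { intros s1 s2 H1 H2.
      assert (Hm0 : 0 < Rmin s1 s2) by (apply Rmin_case; lra).
      pose proof (Rmin_l s1 s2). pose proof (Rmin_r s1 s2).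
      pose proof (dd1 (vadd u v) (Rmin s1 s2 / 2) ltac:(lra)).
      pose proof (Qt_add u v (Rmin s1 s2 / 2) ltac:(lra)).
      pose proof (Qt_mono u (2 * (Rmin s1 s2 / 2)) s1 ltac:(lra)).
      pose proof (Qt_mono v (2 * (Rmin s1 s2 / 2)) s2 ltac:(lra)).
      lra. }
    assert (H2 : forall s2, 0 < s2 -> dd (vadd u v) - Qt v s2 <= dd u).
    { intros s2 Hs2. apply dd2. intros t Ht. specialize (H t s2 Ht Hs2). lra. }
    assert (H3 : dd (vadd u v) - dd u <= dd v) by (apply dd2; intros t Ht; specialize (H2 t Ht); lra).
    lra.
Qed.

End DirectionalDerivative.

(** A finite convex function has a subgradient [zeta] at [z] which, in the
    direction [w], dominates every eventual lower bound of the difference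
    quotients (i.e. [<zeta, w>] is the directional derivative). *)
Lemma subgrad_dir d (F : Vec d -> R) (z w : Vec d) :
  convex_fun F ->
  exists zeta, subgrad F z zeta /\
    forall m, (exists del, 0 < del /\ forall t, 0 < t < del -> m <= (F (vadd z (vscale t w)) - F z) / t) ->
      m <= dot d zeta w.
Proof.
  intro HF.
  destruct (dir_deriv_sublinear F HF z) as [dd [Hsub [dd1 dd2]]].
  destruct (hahn_banach d dd w Hsub) as [zeta [Hz1 Hz2]].
  exists zeta. split.
  - intro y. specialize (Hz1 (vsub y z)). pose proof (dd1 (vsub y z) 1 ltac:(lra)) as H.
    unfold Qt in H. replace (vadd z (vscale 1 (vsub y z))) with y in H
      by (apply vext; intro; unfold vadd, vscale, vsub; ring).
    lra.
  - intros m [del [Hdel Hm]]. rewrite Hz2. apply dd2. intros t Ht.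
    destruct (Rlt_dec t del).
    + apply Hm; lra.
    + pose proof (Qt_mono F HF z w (del / 2) t ltac:(lra)). specialize (Hm (del / 2) ltac:(lra)).
      unfold Qt in *. lra.
Qed.

(** [F] is convex on the convex set [dom] (the shape of the convexity part of
    [proper_closed_convex]). *)
Definition convex_on {d} (dom : Vec d -> Prop) (F : Vec d -> R) : Prop :=
  forall x y t, dom x -> dom y -> 0 <= t <= 1 ->
    dom (vadd (vscale t x) (vscale (1 - t) y)) /\
    F (vadd (vscale t x) (vscale (1 - t) y)) <= t * F x + (1 - t) * F y.

Lemma unif_convex_min d (N : Vec d -> R) (q gam : R) (dom : Vec d -> Prop) (C h : Vec d -> R) (z : Vec d) :
  convex_fun h -> unif_convex N q gam h -> convex_on dom C ->
  dom z -> (forall y, dom y -> C z + h z <= C y + h y) ->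
  forall y, dom y -> C z + h z + gam / q * rpow (N (vsub y z)) q <= C y + h y.
Proof.
  intros Hh Hu Hc Hz Hmin y Hy.
  destruct (subgrad_dir d h z (vsub y z) Hh) as [zeta [Hsg Hm]].
  assert (Hd : C z - C y <= dot d zeta (vsub y z)).
  { apply Hm. exists 1. split; [lra|]. intros t Ht.
    destruct (Hc y z t Hy Hz ltac:(lra)) as [Hdt HCt].
    replace (vadd (vscale t y) (vscale (1 - t) z)) with (vadd z (vscale t (vsub y z))) in Hdt, HCt
      by (apply vext; intro; unfold vadd, vscale, vsub; ring).
    specialize (Hmin _ Hdt).
    apply (Rmult_le_reg_r t); [lra|]. unfold Rdiv. rewrite Rmult_assoc, Rinv_l by lra. lra. }
  specialize (Hu z zeta Hsg y). lra.
Qed.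

(** ** Calculus of one real variable *)

(** Eta-expanded forms of the standard derivative rules, which unify with
    goals written as [fun t => ...]. *)
Lemma dl_plus f g x l1 l2 : derivable_pt_lim f x l1 -> derivable_pt_lim g x l2 ->
  derivable_pt_lim (fun t => f t + g t) x (l1 + l2).
Proof. intros H1 H2; exact (derivable_pt_lim_plus f g x l1 l2 H1 H2). Qed.
Lemma dl_minus f g x l1 l2 : derivable_pt_lim f x l1 -> derivable_pt_lim g x l2 ->
  derivable_pt_lim (fun t => f t - g t) x (l1 - l2).
Proof. intros H1 H2; exact (derivable_pt_lim_minus f g x l1 l2 H1 H2). Qed.
Lemma dl_mult f g x l1 l2 : derivable_pt_lim f x l1 -> derivable_pt_lim g x l2 ->
  derivable_pt_lim (fun t => f t * g t) x (l1 * g x + f x * l2).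
Proof. intros H1 H2; exact (derivable_pt_lim_mult f g x l1 l2 H1 H2). Qed.
Lemma dl_scal f a x l : derivable_pt_lim f x l -> derivable_pt_lim (fun t => a * f t) x (a * l).
Proof. intros H; exact (derivable_pt_lim_scal f a x l H). Qed.
Lemma dl_const a x : derivable_pt_lim (fun _ => a) x 0.
Proof. exact (derivable_pt_lim_const a x). Qed.
Lemma dl_id x : derivable_pt_lim (fun t => t) x 1.
Proof. exact (derivable_pt_lim_id x). Qed.
Lemma derivable_pt_lim_shift f t l : derivable_pt_lim (fun s => f (t + s)) 0 l -> derivable_pt_lim f t l.
Proof.
  intros H eps Heps. destruct (H eps Heps) as [del Hd]. exists del. intros h Hh Hhd.
  specialize (Hd h Hh Hhd). rewrite Rplus_0_l, Rplus_0_r in Hd. exact Hd.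
Qed.
Lemma derivable_pt_lim_one_minus_pow n t :
  derivable_pt_lim (fun s => (1 - s) ^ n) t (- (INR n * (1 - t) ^ pred n)).
Proof.
  pose proof (derivable_pt_lim_comp (fun s => 1 - s) (fun y => y ^ n) t (0 - 1) _
     (dl_minus _ _ t _ _ (dl_const 1 t) (dl_id t)) (derivable_pt_lim_pow (1 - t) n)) as H.
  unfold comp in H. replace (- (INR n * (1 - t) ^ pred n)) with (INR n * (1 - t) ^ pred n * (0 - 1)) by ring.
  exact H.
Qed.

Fixpoint sumR (n : nat) (F : nat -> R) : R :=
  match n with O => 0 | S n' => sumR n' F + F n' end.

Lemma sum_f_R0_sumR G n : sum_f_R0 G n = sumR (S n) G.
Proof. induction n as [|n IH]; simpl in *; [lra|]. rewrite IH. reflexivity. Qed.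
Lemma sum_f_1 F n : sum_f 1 (S n) F = sumR (S n) (fun j => F (S j)).
Proof.
  unfold sum_f. replace (S n - 1)%nat with n by lia. rewrite sum_f_R0_sumR.
  apply f_equal2; [reflexivity|]. apply functional_extensionality; intro x. rewrite Nat.add_1_r. reflexivity.
Qed.

Lemma derivable_pt_lim_sumR n (G : nat -> R -> R) (G' : nat -> R) x :
  (forall k, (k < n)%nat -> derivable_pt_lim (G k) x (G' k)) ->
  derivable_pt_lim (fun t => sumR n (fun k => G k t)) x (sumR n G').
Proof.
  induction n as [|n IH]; intros H; simpl.
  - apply dl_const.
  - apply dl_plus; [apply IH; intros; apply H; lia|apply H; lia].
Qed.

(** ** Multilinear derivatives *)
Section Multilinear.
Context {d : nat} (p : nat) (g : Vec d -> R) (D : nat -> Vec d -> list (Vec d) -> R) (Hder : derivs_of p g D).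

Lemma D_perm i x ys ys' : (i <= p)%nat -> length ys = i -> Permutation ys ys' -> D i x ys = D i x ys'.
Proof. destruct Hder as [_ [H _]]; apply H. Qed.
Lemma D_lin_slot i x pre rest a u v :
  (1 <= i <= p)%nat -> (length pre + S (length rest) = i)%nat ->
  D i x (pre ++ vadd (vscale a u) v :: rest) = a * D i x (pre ++ u :: rest) + D i x (pre ++ v :: rest).
Proof.
  intros Hi Hl. destruct Hder as [_ [_ [Hlin _]]].
  assert (Hp : forall X, Permutation (pre ++ X :: rest) (X :: pre ++ rest)) by (intro; apply Permutation_sym, Permutation_middle).
  assert (HL : forall X, length (pre ++ X :: rest) = i) by (intro; rewrite length_app; simpl; lia).
  rewrite !(D_perm i x _ _ ltac:(lia) (HL _) (Hp _)).
  apply Hlin; [lia|]. rewrite length_app; lia.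
Qed.

Lemma D_zero_slot i x pre rest :
  (1 <= i <= p)%nat -> (length pre + S (length rest) = i)%nat ->
  D i x (pre ++ (fun _ => 0) :: rest) = 0.
Proof.
  intros Hi Hl. pose proof (D_lin_slot i x pre rest 1 (fun _ => 0) (fun _ => 0) Hi Hl) as H.
  replace (vadd (vscale 1 (fun _ : Fin.t d => 0)) (fun _ => 0)) with (fun _ : Fin.t d => 0) in H
    by (apply vext; intro; unfold vadd, vscale; ring).
  unfold Vec in *. lra.
Qed.

Lemma D_scale_slot i x pre rest c u :
  (1 <= i <= p)%nat -> (length pre + S (length rest) = i)%nat ->
  D i x (pre ++ vscale c u :: rest) = c * D i x (pre ++ u :: rest).
Proof.
  intros Hi Hl. pose proof (D_lin_slot i x pre rest c u (fun _ => 0) Hi Hl) as H.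
  replace (vadd (vscale c u) (fun _ : Fin.t d => 0)) with (vscale c u) in H
    by (apply vext; intro; unfold vadd, vscale; ring).
  rewrite D_zero_slot in H by auto. lra.
Qed.

Lemma D_scale_repeat i x k : forall pre rest c u,
  (1 <= i <= p)%nat -> (length pre + k + length rest = i)%nat ->
  D i x (pre ++ repeat (vscale c u) k ++ rest) = c ^ k * D i x (pre ++ repeat u k ++ rest).
Proof.
  induction k as [|k IH]; intros pre rest c u Hi Hl; simpl; [ring|].
  rewrite D_scale_slot by (try rewrite length_app, repeat_length; lia).
  replace (pre ++ u :: repeat (vscale c u) k ++ rest) with ((pre ++ u :: nil) ++ repeat (vscale c u) k ++ rest)
    by (rewrite <- app_assoc; reflexivity).
  rewrite IH by (try rewrite length_app; simpl; lia).
  rewrite <- app_assoc. simpl. ring.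
Qed.

Lemma poly_deriv i y v w m : forall pre,
  (1 <= i <= p)%nat -> (length pre + m = i)%nat ->
  derivable_pt_lim (fun t => D i y (pre ++ repeat (vadd v (vscale t w)) m)) 0
    (INR m * D i y (pre ++ w :: repeat v (m - 1))).
Proof.
  induction m as [|m IH]; intros pre Hi Hl.
  - simpl. rewrite Rmult_0_l. apply dl_const.
  - assert (Hf : forall t, D i y (pre ++ repeat (vadd v (vscale t w)) (S m)) =
        t * D i y ((pre ++ w :: nil) ++ repeat (vadd v (vscale t w)) m)
        + D i y ((pre ++ v :: nil) ++ repeat (vadd v (vscale t w)) m)).
    { intro t. simpl. rewrite <- !app_assoc. simpl.
      replace (vadd v (vscale t w)) with (vadd (vscale t w) v) at 1 by (apply vext; intro; unfold vadd; ring).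
      apply D_lin_slot; auto. rewrite repeat_length; lia. }
    eapply derivable_pt_lim_ext; [intro t; symmetry; apply Hf|].
    assert (HG := IH (pre ++ w :: nil) Hi ltac:(rewrite length_app; simpl; lia)).
    assert (HH := IH (pre ++ v :: nil) Hi ltac:(rewrite length_app; simpl; lia)).
    pose proof (dl_plus _ _ 0 _ _ (dl_mult _ _ 0 _ _ (dl_id 0) HG) HH) as Hsum.
    simpl in Hsum.
    replace (vadd v (vscale 0 w)) with v in Hsum by (apply vext; intro; unfold vadd, vscale; ring).
    replace (S m - 1)%nat with m by lia.
    assert (Heq : INR m * D i y ((pre ++ v :: nil) ++ w :: repeat v (m - 1)) = INR m * D i y (pre ++ w :: repeat v m)).
    { destruct m as [|m']; [simpl; ring|]. f_equal.
      apply D_perm; [lia| |].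
      - rewrite length_app, length_app; simpl; rewrite repeat_length; lia.
      - rewrite <- app_assoc. apply Permutation_app_head. replace (S m' - 1)%nat with m' by lia. simpl. apply perm_swap. }
    rewrite Heq in Hsum. rewrite S_INR.
    replace ((INR m + 1) * D i y (pre ++ w :: repeat v m)) with
      (1 * D i y ((pre ++ w :: nil) ++ repeat v m) + 0 * (INR m * D i y ((pre ++ w :: nil) ++ w :: repeat v (m - 1))) + INR m * D i y (pre ++ w :: repeat v m)).
    + exact Hsum.
    + rewrite <- app_assoc. simpl. ring.
Qed.
Lemma D1_linear (Hp : (1 <= p)%nat) X a b u v :
  D 1%nat X (vadd (vscale a u) (vscale b v) :: nil) = a * D 1%nat X (u :: nil) + b * D 1%nat X (v :: nil).
Proof.
  pose proof (D_lin_slot 1 X nil nil a u (vscale b v) ltac:(lia) ltac:(simpl; lia)) as H.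
  pose proof (D_scale_slot 1 X nil nil b v ltac:(lia) ltac:(simpl; lia)) as H2.
  simpl app in H, H2. rewrite H, H2. reflexivity.
Qed.
End Multilinear.

Lemma fact_pos_R n : 0 < INR (fact n).
Proof. apply lt_0_INR. apply lt_O_fact. Qed.
(** Derivative of the Taylor polynomial with integral-free remainder:
    [d/ds sum_(j<=k) f_j(s) (1-s)^j / j! = f_(k+1)(s) (1-s)^k / k!]
    (the sum telescopes). *)
Lemma taylor_sum_deriv k (f : nat -> R -> R) t :
  (forall j, (j <= k)%nat -> derivable_pt_lim (f j) t (f (S j) t)) ->
  derivable_pt_lim (fun s => sumR (S k) (fun j => f j s * (1 - s) ^ j / INR (fact j))) t
    (f (S k) t * (1 - t) ^ k / INR (fact k)).
Proof.
  induction k as [|k IH]; intros H.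
  - replace (f 1%nat t * (1 - t) ^ 0 / INR (fact 0)) with (f 1%nat t) by (simpl; field).
    eapply derivable_pt_lim_ext; [|apply (H 0%nat (le_n _))].
    intro s. simpl. field.
  - assert (Hterm : derivable_pt_lim (fun s => / INR (fact (S k)) * (f (S k) s * (1 - s) ^ (S k))) t
       (/ INR (fact (S k)) * (f (S (S k)) t * (1 - t) ^ (S k) + f (S k) t * (- (INR (S k) * (1 - t) ^ pred (S k)))))).
    { apply dl_scal. apply dl_mult; [apply H; lia|apply derivable_pt_lim_one_minus_pow]. }
    pose proof (dl_plus _ _ t _ _ (IH (fun j Hj => H j ltac:(lia))) Hterm) as Hs.
    eapply derivable_pt_lim_ext; [|replace (f (S (S k)) t * (1 - t) ^ S k / INR (fact (S k))) with
      (f (S k) t * (1 - t) ^ k / INR (fact k) +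
       / INR (fact (S k)) * (f (S (S k)) t * (1 - t) ^ S k + f (S k) t * - (INR (S k) * (1 - t) ^ Init.Nat.pred (S k)))); [exact Hs|]].
    + intro s. cbn [sumR]. unfold Rdiv. ring.
    + simpl pred. rewrite fact_simpl, mult_INR. pose proof (fact_pos_R k). pose proof (pos_INR k).
      rewrite S_INR. field. lra.
Qed.

Lemma taylor_lag m (f : nat -> R -> R) :
  (forall j t, (j < m)%nat -> 0 <= t <= 1 -> derivable_pt_lim (f j) t (f (S j) t)) ->
  exists tau, 0 <= tau <= 1 /\
    f 0%nat 1 = sumR m (fun j => f j 0 / INR (fact j)) + f m tau / INR (fact m).
Proof.
  intros H. destruct m as [|k].
  - exists 1. split; [lra|]. simpl. field.
  - set (R0 := f 0%nat 1 - sumR (S k) (fun j => f j 0 / INR (fact j))).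
    destruct (MVT_cor2 (fun s => sumR (S k) (fun j => f j s * (1 - s) ^ j / INR (fact j)) + R0 * (1 - s) ^ (S k))
               (fun s => f (S k) s * (1 - s) ^ k / INR (fact k) + R0 * (- (INR (S k) * (1 - s) ^ pred (S k))))
               0 1 ltac:(lra)) as [c [Hc Hcb]].
    { intros c Hc. apply dl_plus.
      - apply taylor_sum_deriv. intros j Hj. apply H; [lia|lra].
      - apply dl_scal. apply derivable_pt_lim_one_minus_pow. }
    assert (H1 : forall n, sumR (S n) (fun j => f j 1 * (1 - 1) ^ j / INR (fact j)) = f 0%nat 1).
    { induction n as [|n IHn]; [simpl; field|]. cbn [sumR] in *. rewrite IHn.
      replace (1 - 1) with 0 by ring. rewrite pow_i by lia. field. apply Rgt_not_eq, fact_pos_R. }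
    assert (H0 : forall n, sumR n (fun j => f j 0 * (1 - 0) ^ j / INR (fact j)) = sumR n (fun j => f j 0 / INR (fact j))).
    { induction n as [|n IHn]; [reflexivity|]. cbn [sumR]. rewrite IHn. replace (1 - 0) with 1 by ring. rewrite pow1. field.
      apply Rgt_not_eq, fact_pos_R. }
    rewrite H1, H0 in Hc. simpl pred in Hc.
    replace (1 - 1) with 0 in Hc by ring. replace (1 - 0) with 1 in Hc by ring. rewrite pow_i, pow1 in Hc by lia.
    exists c. split; [lra|].
    assert (Hp : 0 < (1 - c) ^ k) by (apply pow_lt; lra).
    rewrite fact_simpl, mult_INR. pose proof (fact_pos_R k). rewrite S_INR.
    assert (E : R0 = f (S k) c / (INR (fact k) * (INR k + 1))).
    { assert (E2 : (1 - c) ^ k * (f (S k) c / INR (fact k) - R0 * (INR k + 1)) = 0).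
      { rewrite S_INR in Hc. unfold R0 in *. nra. }
      apply Rmult_integral in E2. destruct E2 as [E2|E2]; [lra|].
      pose proof (pos_INR k).
      replace (f (S k) c / (INR (fact k) * (INR k + 1))) with ((f (S k) c / INR (fact k)) / (INR k + 1)) by (field; lra).
      replace (f (S k) c / INR (fact k)) with (R0 * (INR k + 1)) by lra. field. lra. }
    unfold R0 in E. rewrite (Rmult_comm (INR k + 1)). lra.
Qed.

Lemma sumR_ext n F G : (forall k, (k < n)%nat -> F k = G k) -> sumR n F = sumR n G.
Proof. induction n as [|n IH]; intros H; simpl; [reflexivity|]. rewrite IH by (intros; apply H; lia). rewrite H by lia. reflexivity. Qed.
(** ** Gradient of the Taylor model
    [DPhi y x w] is the derivative of the Taylor model [Phi_y] at [x] in
    direction [w].  The key estimate [grad_rem] compares it with the true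
    derivative [D 1 x w]: their difference is at most
    [L ||x - y||^(q-1) ||w||] by Taylor's theorem and Hoelder continuity. *)
Section TaylorModel.
Context {d : nat} (p : nat) (g : Vec d -> R) (D : nat -> Vec d -> list (Vec d) -> R)
  (Hder : derivs_of p g D) (Hp : (1 <= p)%nat).
Definition DPhi (y x w : Vec d) : R :=
  sum_f 1 p (fun i => / INR (fact i) * (INR i * D i y (w :: repeat (vsub x y) (i - 1)))).
Lemma phi_deriv y x w :
  derivable_pt_lim (fun t => Phi p g D y (vadd x (vscale t w))) 0 (DPhi y x w).
Proof.
  unfold DPhi, Phi.
  destruct p as [|p'] eqn:Ep; [lia|].
  rewrite sum_f_1.
  assert (H : derivable_pt_lim (fun t => g y + sumR (S p') (fun j => / INR (fact (S j)) * D (S j) y (repeat (vsub (vadd x (vscale t w)) y) (S j)))) 0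
     (0 + sumR (S p') (fun j => / INR (fact (S j)) * (INR (S j) * D (S j) y (w :: repeat (vsub x y) (S j - 1)))))).
  { apply dl_plus; [apply dl_const|].
    apply (derivable_pt_lim_sumR (S p') (fun j t => / INR (fact (S j)) * D (S j) y (repeat (vsub (vadd x (vscale t w)) y) (S j)))).
    intros k Hk. apply dl_scal.
    apply (derivable_pt_lim_ext (fun t => D (S k) y (nil ++ repeat (vadd (vsub x y) (vscale t w)) (S k)))).
    { intro t. simpl app. replace (vsub (vadd x (vscale t w)) y) with (vadd (vsub x y) (vscale t w)) by (apply vext; intro; unfold vsub, vadd, vscale; ring). reflexivity. }
    apply (poly_deriv (S p') g D Hder (S k) y (vsub x y) w (S k) nil); simpl; lia. }
  rewrite Rplus_0_l in H.
  eapply derivable_pt_lim_ext; [|exact H]. intro t. cbv beta. rewrite sum_f_1. reflexivity.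
Qed.

Lemma DPhi_alt y x w :
  DPhi y x w = sumR p (fun j => D (S j) y (repeat (vsub x y) j ++ w :: nil) / INR (fact j)).
Proof.
  unfold DPhi. destruct p as [|p'] eqn:Ep; [lia|]. rewrite sum_f_1.
  apply sumR_ext. intros k Hk.
  replace (S k - 1)%nat with k by lia.
  rewrite (D_perm (S p') g D Hder (S k) y (w :: repeat (vsub x y) k) (repeat (vsub x y) k ++ w :: nil)); [|lia|simpl; rewrite repeat_length; lia|apply Permutation_cons_append].
  rewrite fact_simpl, mult_INR. pose proof (fact_pos_R k). pose proof (pos_INR k). rewrite S_INR. field. lra.
Qed.

Context (N : Vec d -> R) (HN : is_norm N) (nu L : R)
  (Hhol : holder_pth N p nu L D) (Hnu : 0 <= nu) (HL0 : 0 <= L).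

Lemma holder_scaled X Y v w :
  / INR (fact (p - 1)) * (D p X (repeat v (p - 1) ++ w :: nil) - D p Y (repeat v (p - 1) ++ w :: nil))
  <= L * rpow (N (vsub X Y)) nu * (N v ^ (p - 1) * N w).
Proof.
  destruct (norm_decomp N HN v) as [vh [Hvh Ev]]. destruct (norm_decomp N HN w) as [wh [Hwh Ew]].
  assert (Hs : forall Z, D p Z (repeat v (p - 1) ++ w :: nil) = N v ^ (p - 1) * N w * D p Z (repeat vh (p - 1) ++ wh :: nil)).
  { intro Z. rewrite Ev at 1. rewrite Ew at 1.
    pose proof (D_scale_repeat p g D Hder p Z (p - 1) nil (vscale (N w) wh :: nil) (N v) vh ltac:(lia) ltac:(simpl; lia)) as E1.
    simpl app in E1. rewrite E1.
    rewrite (D_scale_slot p g D Hder p Z (repeat vh (p - 1)) nil) by (rewrite ?repeat_length; simpl; rewrite ?repeat_length; lia).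
    ring. }
  rewrite !Hs.
  assert (Hh := Hhol X Y (repeat vh (p - 1) ++ wh :: nil)).
  assert (Hl : length (repeat vh (p - 1) ++ wh :: nil) = p) by (rewrite length_app, repeat_length; simpl; lia).
  assert (Hf : Forall (fun v0 => N v0 <= 1) (repeat vh (p - 1) ++ wh :: nil)).
  { apply Forall_app. split; [apply Forall_forall; intros z Hz; apply repeat_spec in Hz; subst; auto|constructor; auto]. }
  specialize (Hh Hl Hf).
  assert (Hc : 0 <= N v ^ (p - 1) * N w) by (apply Rmult_le_pos; [apply pow_le, N_nonneg; auto|apply N_nonneg; auto]).
  replace (/ INR (fact (p - 1)) * (N v ^ (p - 1) * N w * D p X (repeat vh (p - 1) ++ wh :: nil) -
      N v ^ (p - 1) * N w * D p Y (repeat vh (p - 1) ++ wh :: nil)))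
    with ((N v ^ (p - 1) * N w) * (/ INR (fact (p - 1)) * (D p X (repeat vh (p - 1) ++ wh :: nil) - D p Y (repeat vh (p - 1) ++ wh :: nil)))) by ring.
  rewrite (Rmult_comm (L * _)). apply Rmult_le_compat_l; auto.
Qed.

Lemma grad_rem y x w :
  - (L * rpow (N (vsub x y)) (INR p + nu - 1) * N w) <= D 1 x (w :: nil) - DPhi y x w.
Proof.
  set (v := vsub x y).
  (* Taylor expansion of [t |-> D 1 (y + t v) [w]] to order [p - 1] on [0, 1]:
     the Lagrange remainder is [D p (y + tau v) [v^(p-1), w] / (p-1)!] *)
  set (f := fun j t => D (S j) (vadd y (vscale t v)) (repeat v j ++ w :: nil)).
  destruct (taylor_lag (p - 1) f) as [tau [Htau Ht]].
  { intros j t Hj _. apply derivable_pt_lim_shift. unfold f.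
    destruct Hder as [_ [_ [_ Hd]]].
    specialize (Hd (S j) (vadd y (vscale t v)) v (repeat v j ++ w :: nil) ltac:(lia)
      ltac:(rewrite length_app, repeat_length; simpl; lia)).
    eapply derivable_pt_lim_ext; [|exact Hd]. intro s. simpl. f_equal. apply vext; intro; unfold vadd, vscale; ring. }
  pose proof (holder_scaled y (vadd y (vscale tau v)) v w) as Hh.
  unfold f in Ht. simpl in Ht.
  replace (vadd y (vscale 1 v)) with x in Ht by (apply vext; intro; unfold v, vadd, vscale, vsub; ring).
  rewrite DPhi_alt. fold v.
  destruct p as [|p'] eqn:Ep; [lia|].
  replace (S p' - 1)%nat with p' in * by lia.
  cbn [sumR]. rewrite Ht.
  assert (E0 : sumR p' (fun j => D (S j) (vadd y (vscale 0 v)) (repeat v j ++ w :: nil) / INR (fact j))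
             = sumR p' (fun j => D (S j) y (repeat v j ++ w :: nil) / INR (fact j))).
  { apply sumR_ext; intros. replace (vadd y (vscale 0 v)) with y by (apply vext; intro; unfold vadd, vscale; ring). reflexivity. }
  rewrite E0.
  (* Hoelder continuity bounds the remainder's deviation from [D p y] *)
  replace (vsub y (vadd y (vscale tau v))) with (vscale (- tau) v) in Hh by (apply vext; intro; unfold vsub, vadd, vscale; ring).
  rewrite N_scale in Hh by auto. rewrite Rabs_left1 in Hh by lra. rewrite Ropp_involutive in Hh.
  assert (Hr : rpow (tau * N v) nu <= rpow (N v) nu).
  { apply rpow_le_base; auto. pose proof (N_nonneg N HN v). split; [nra|]. nra. }
  assert (HNv := N_nonneg N HN v). assert (HNw := N_nonneg N HN w).
  assert (Hpow : rpow (N v) nu * (N v ^ p' * N w) = rpow (N v) (INR (S p') + nu - 1) * N w).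
  { rewrite S_INR. replace (INR p' + 1 + nu - 1) with (INR p' + nu) by ring. rewrite <- rpow_pow_plus by auto. ring. }
  assert (Hm : L * rpow (tau * N v) nu * (N v ^ p' * N w) <= L * rpow (N v) nu * (N v ^ p' * N w)).
  { apply Rmult_le_compat_r; [apply Rmult_le_pos; [apply pow_le|]; auto|]. apply Rmult_le_compat_l; lra. }
  rewrite (Rmult_assoc L (rpow (N v) nu)), Hpow in Hm.
  set (A := D (S p') (vadd y (vscale tau v)) (repeat v p' ++ w :: nil)) in *.
  set (B := D (S p') y (repeat v p' ++ w :: nil)) in *.
  assert (E : / INR (fact p') * (B - A) = B / INR (fact p') - A / INR (fact p')) by (unfold Rdiv; ring).
  rewrite E in Hh. lra.
Qed.
End TaylorModel.

(** Convexity of [t |-> t^q] for [q >= 1] on [R_+], via the tangent-line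
    bound given by the convex Bernoulli inequality. *)
Lemma pow_convex a b t q : 0 <= a -> 0 <= b -> 0 <= t <= 1 -> 1 <= q ->
  rpow (t * a + (1 - t) * b) q <= t * rpow a q + (1 - t) * rpow b q.
Proof.
  intros Ha Hb Ht Hq.
  assert (Hm0 : 0 <= t * a + (1 - t) * b) by nra.
  destruct Hm0 as [Hm|Hm].
  2:{ rewrite <- Hm, rpow_0_l. pose proof (rpow_nonneg a q). pose proof (rpow_nonneg b q). nra. }
  set (m := t * a + (1 - t) * b) in *.
  assert (Htan : forall z, 0 <= z -> rpow m q + q * rpow m q / m * (z - m) <= rpow z q).
  { intros z Hz. pose proof (bernoulli_convex (z / m) q ltac:(apply Rdiv_nonneg; lra) Hq) as H.
    assert (Ez : z = m * (z / m)) by (field; lra).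
    rewrite Ez at 2. rewrite rpow_mult_base by (try lra; apply Rdiv_nonneg; lra).
    pose proof (rpow_pos m q Hm).
    apply Rle_trans with (rpow m q * (1 + q * (z / m - 1))); [right; field; lra|].
    apply Rmult_le_compat_l; lra. }
  pose proof (Htan a Ha). pose proof (Htan b Hb).
  assert (E : t * (a - m) + (1 - t) * (b - m) = 0) by (unfold m; ring).
  set (K := q * rpow m q / m) in *.
  assert (t * (rpow m q + K * (a - m)) + (1 - t) * (rpow m q + K * (b - m)) <= t * rpow a q + (1 - t) * rpow b q).
  { apply Rplus_le_compat; apply Rmult_le_compat_l; lra. }
  assert (E2 : t * (rpow m q + K * (a - m)) + (1 - t) * (rpow m q + K * (b - m)) = rpow m q + K * (t * (a - m) + (1 - t) * (b - m))) by ring.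
  rewrite E2, E in H1. lra.
Qed.

Lemma normq_convex {d} (N : Vec d -> R) (HN : is_norm N) (q : R) (c : Vec d) : 1 <= q ->
  convex_fun (fun y => / q * rpow (N (vsub y c)) q).
Proof.
  intros Hq x y t Ht.
  replace (vsub (vadd (vscale t x) (vscale (1 - t) y)) c) with (vadd (vscale t (vsub x c)) (vscale (1 - t) (vsub y c)))
    by (apply vext; intro; unfold vsub, vadd, vscale; ring).
  assert (H1 : N (vadd (vscale t (vsub x c)) (vscale (1 - t) (vsub y c))) <= t * N (vsub x c) + (1 - t) * N (vsub y c)).
  { eapply Rle_trans; [apply N_tri; auto|]. rewrite !N_scale by auto. rewrite !Rabs_right by lra. lra. }
  assert (H2 := rpow_le_base _ _ q ltac:(lra) (conj (N_nonneg N HN _) H1)).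
  pose proof (pow_convex (N (vsub x c)) (N (vsub y c)) t q (N_nonneg N HN _) (N_nonneg N HN _) Ht Hq).
  assert (Hiq : 0 < / q) by (apply Rinv_0_lt_compat; lra).
  apply Rle_trans with (/ q * (t * rpow (N (vsub x c)) q + (1 - t) * rpow (N (vsub y c)) q)); [|right; ring].
  apply Rmult_le_compat_l; lra.
Qed.

Lemma grad_ineq {d} (p : nat) (g : Vec d -> R) (D : nat -> Vec d -> list (Vec d) -> R) :
  convex_fun g -> derivs_of p g D -> (1 <= p)%nat ->
  forall x u, g x + D 1%nat x (vsub u x :: nil) <= g u.
Proof.
  intros Hg Hder Hp x u.
  set (h := vsub u x).
  assert (Hd : derivable_pt_lim (fun t => g (vadd x (vscale t h))) 0 (D 1%nat x (h :: nil))).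
  { destruct Hder as [H0 [_ [_ Hd]]]. specialize (Hd 0%nat x h nil ltac:(lia) eq_refl).
    eapply derivable_pt_lim_ext; [|exact Hd]. intro t. apply H0. }
  assert (Hq : forall t, 0 < t <= 1 -> (g (vadd x (vscale t h)) - g x) / t <= g u - g x).
  { intros t Ht. pose proof (Hg u x t ltac:(lra)) as H.
    replace (vadd (vscale t u) (vscale (1 - t) x)) with (vadd x (vscale t h)) in H
      by (apply vext; intro; unfold h, vadd, vscale, vsub; ring).
    apply (Rmult_le_reg_r t); [lra|]. unfold Rdiv. rewrite Rmult_assoc, Rinv_l by lra. lra. }
  destruct (Rle_dec (D 1%nat x (h :: nil)) (g u - g x)) as [Hle|Hgt]; [lra|].
  exfalso. apply Rnot_le_lt in Hgt.
  destruct (Hd (D 1%nat x (h :: nil) - (g u - g x)) ltac:(lra)) as [del Hdel].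
  set (t := Rmin (del / 2) (1 / 2)).
  assert (Ht0 : 0 < t) by (unfold t; apply Rmin_case; pose proof (cond_pos del); lra).
  assert (Ht1 : t <= 1 / 2) by (apply Rmin_r).
  assert (Ht2 : t <= del / 2) by (apply Rmin_l).
  specialize (Hdel t ltac:(lra) ltac:(rewrite Rabs_right by lra; pose proof (cond_pos del); lra)).
  rewrite Rplus_0_l in Hdel.
  replace (vadd x (vscale 0 h)) with x in Hdel by (apply vext; intro; unfold vadd, vscale; ring).
  specialize (Hq t ltac:(lra)).
  apply Rabs_def2 in Hdel. lra.
Qed.

(** ** One step of the regularized Taylor method *)

Section RegularizedStep.
Context {d : nat} (N : Vec d -> R) (HN : is_norm N) (p : nat) (nu L : R)
  (g : Vec d -> R) (D : nat -> Vec d -> list (Vec d) -> R)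
  (Hder : derivs_of p g D) (Hhol : holder_pth N p nu L D) (Hp : (1 <= p)%nat) (Hnu : 0 <= nu)
  (HL : 0 < L) (dom : Vec d -> Prop) (l : Vec d -> R) (Hlc : convex_on dom l).

(** First-order optimality of a minimizer [xi] of the regularized model
    [Phi_xh + l + c ||. - xh||^q] over [dom], tested in the direction
    [w = u - xi]: here [rho] is a subgradient of [1/q ||. - xh||^q] at [xi]
    realizing its directional derivative along [w]. *)
Lemma model_first_order (xh xi u rho : Vec d) (c : R) :
  0 < c -> dom xi -> dom u ->
  (forall m, (exists del, 0 < del /\ forall t, 0 < t < del ->
       m <= (/ (INR p + nu) * rpow (N (vsub (vadd xi (vscale t (vsub u xi))) xh)) (INR p + nu)
             - / (INR p + nu) * rpow (N (vsub xi xh)) (INR p + nu)) / t) ->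
     m <= dot d rho (vsub u xi)) ->
  (forall y, dom y ->
     Phi p g D xh xi + l xi + c * rpow (N (vsub xi xh)) (INR p + nu)
     <= Phi p g D xh y + l y + c * rpow (N (vsub y xh)) (INR p + nu)) ->
  0 <= DPhi p D xh xi (vsub u xi) + (l u - l xi) + c * (INR p + nu) * dot d rho (vsub u xi).
Proof.
  intros Hc Hxi Hu Hm Hopt.
  set (q := INR p + nu) in *. set (w := vsub u xi) in *. set (M := c * q).
  assert (Hq0 : 0 < q) by (unfold q; pose proof (lt_0_INR p ltac:(lia)); lra).
  assert (HM : 0 < M) by (unfold M; nra).
  set (phi := fun y => / q * rpow (N (vsub y xh)) q).
  set (DP := DPhi p D xh xi w). set (dl := l u - l xi).
  apply Rnot_lt_le. intro HS.
  set (S := DP + dl + M * dot d rho w) in *.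
  (* a negative slope would make [dot rho w - S/(2M)] an eventual lower bound
     of the difference quotients of [phi], exceeding [dot rho w] *)
  assert (Hmm : dot d rho w - S / (2 * M) <= dot d rho w).
  { apply Hm.
    destruct (phi_deriv p g D Hder Hp xh xi w (- S / 2) ltac:(lra)) as [del Hdel].
    exists (Rmin del 1). split; [apply Rmin_case; [apply cond_pos|lra]|].
    intros t Ht.
    assert (Ht1 : t <= 1) by (pose proof (Rmin_r del 1); lra).
    assert (Htd : t < del) by (pose proof (Rmin_l del 1); lra).
    specialize (Hdel t ltac:(lra) ltac:(rewrite Rabs_right by lra; lra)).
    rewrite Rplus_0_l in Hdel.
    replace (vadd xi (vscale 0 w)) with xi in Hdel by (apply vext; intro; unfold vadd, vscale; ring).
    apply Rabs_def2 in Hdel. destruct Hdel as [Hd1 Hd2].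
    destruct (Hlc u xi t Hu Hxi ltac:(lra)) as [Hdt Hlt].
    replace (vadd (vscale t u) (vscale (1 - t) xi)) with (vadd xi (vscale t w)) in Hdt, Hlt
      by (apply vext; intro; unfold w, vadd, vscale, vsub; ring).
    specialize (Hopt _ Hdt).
    (* optimality of [xi] against [xi + t w] *)
    assert (HQ : 0 <= (Phi p g D xh (vadd xi (vscale t w)) - Phi p g D xh xi) / t + dl
                      + M * ((phi (vadd xi (vscale t w)) - phi xi) / t)).
    { unfold phi, M, dl. unfold Rdiv.
      replace ((Phi p g D xh (vadd xi (vscale t w)) - Phi p g D xh xi) * / t + (l u - l xi) +
         c * q * ((/ q * rpow (N (vsub (vadd xi (vscale t w)) xh)) q - / q * rpow (N (vsub xi xh)) q) * / t))
        with (((Phi p g D xh (vadd xi (vscale t w)) + t * l u + (1 - t) * l xi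
                + c * rpow (N (vsub (vadd xi (vscale t w)) xh)) q)
               - (Phi p g D xh xi + l xi + c * rpow (N (vsub xi xh)) q)) * / t) by (field; lra).
      apply Rmult_le_pos; [|left; apply Rinv_0_lt_compat; lra]. lra. }
    apply (Rmult_le_reg_l M); [lra|].
    unfold S. replace (M * (dot d rho w - (DP + dl + M * dot d rho w) / (2 * M))) with
      (M * dot d rho w / 2 - (DP + dl) / 2) by (field; lra).
    fold DP in Hd1, Hd2. unfold S in Hd1. unfold phi in HQ. lra. }
  assert (Hn : 0 < - S / (2 * M)) by (apply Rdiv_lt_0_compat; lra).
  unfold Rdiv in *. lra.
Qed.

(** It combines first-order optimality, uniform convexity of [1/q ||.||^q],
    the gradient bound [grad_rem] and the Young inequality [young_cq]. *)
Lemma step_x (beta : R) (xh xi : Vec d) (c K : R) :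
  0 < beta -> 2 <= INR p + nu ->
  unif_convex N (INR p + nu) beta (fun y => / (INR p + nu) * rpow (N y) (INR p + nu)) ->
  0 < c -> L <= c * (INR p + nu) * c_q beta (INR p + nu) -> c <= K -> dom xi ->
  (forall y, dom y ->
     Phi p g D xh xi + l xi + c * rpow (N (vsub xi xh)) (INR p + nu)
     <= Phi p g D xh y + l y + c * rpow (N (vsub y xh)) (INR p + nu)) ->
  forall u, dom u -> l xi <= D 1%nat xi (vsub u xi :: nil) + l u + K * rpow (N (vsub u xh)) (INR p + nu).
Proof.
  intros Hb Hq2 Hunif Hc HcL HK Hxi Hopt u Hu.
  set (q := INR p + nu) in *. set (M := c * q). set (w := vsub u xi).
  assert (Hq0 : 0 < q) by lra.
  assert (HM : 0 < M) by (unfold M; nra).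
  set (phi := fun y => / q * rpow (N (vsub y xh)) q).
  destruct (subgrad_dir d phi xi w (normq_convex N HN q xh ltac:(lra))) as [rho [Hsg Hm]].
  pose proof (model_first_order xh xi u rho c Hc Hxi Hu Hm Hopt) as Hfirst.
  (* uniform convexity of [1/q ||.||^q] at [xi - xh] *)
  assert (Hunif_rho : dot d rho w <= phi u - phi xi - beta / q * rpow (N w) q).
  { assert (Hsg0 : subgrad (fun y => / q * rpow (N y) q) (vsub xi xh) rho).
    { intro y. specialize (Hsg (vadd y xh)). unfold phi in Hsg.
      replace (vsub (vadd y xh) xh) with y in Hsg by (apply vext; intro; unfold vsub, vadd; ring).
      replace (vsub (vadd y xh) xi) with (vsub y (vsub xi xh)) in Hsg
        by (apply vext; intro; unfold vsub, vadd; ring).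
      exact Hsg. }
    specialize (Hunif _ _ Hsg0 (vsub u xh)).
    replace (vsub (vsub u xh) (vsub xi xh)) with w in Hunif by (apply vext; intro; unfold w, vsub; ring).
    unfold phi. lra. }
  pose proof (grad_rem p g D Hder Hp N HN nu L Hhol Hnu ltac:(lra) xh xi w) as Hgrad.
  pose proof (young_cq q beta M L (N (vsub xi xh)) (N w) ltac:(lra) Hb HM ltac:(lra)
                (N_nonneg N HN _) (N_nonneg N HN _) ltac:(unfold M; lra)) as Hyoung.
  assert (HMrho : M * dot d rho w <= c * rpow (N (vsub u xh)) q
                    - M / q * (rpow (N (vsub xi xh)) q + beta * rpow (N w) q)).
  { replace (c * rpow (N (vsub u xh)) q - M / q * (rpow (N (vsub xi xh)) q + beta * rpow (N w) q))
      with (M * (phi u - phi xi - beta / q * rpow (N w) q)) by (unfold M, phi; field; lra).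
    apply Rmult_le_compat_l; lra. }
  assert (Hs : c * rpow (N (vsub u xh)) q <= K * rpow (N (vsub u xh)) q)
    by (apply Rmult_le_compat_r; [apply rpow_nonneg|lra]).
  fold q w in Hfirst, Hgrad. fold M in Hfirst. fold w. lra.
Qed.

(** Choice of the comparison coefficient in [one_step]:
    [K = gamma A^(q-1) / (q anew^q)] dominates [c] and makes
    [A K (anew/A)^q = gamma/q]. *)
Lemma step_prox_coeff q gamma c Aprev anew :
  0 < q -> 0 <= Aprev -> 0 < anew -> c * q * rpow anew q <= gamma * rpow (Aprev + anew) (q - 1) ->
  exists K, c <= K /\ (Aprev + anew) * K * rpow (anew / (Aprev + anew)) q = gamma / q.
Proof.
  intros Hq HAp Han HcK.
  set (A := Aprev + anew) in *.
  assert (HA : 0 < A) by (unfold A; lra).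
  assert (Hanq : 0 < rpow anew q) by (apply rpow_pos; lra).
  assert (HAq1 : 0 < rpow A (q - 1)) by (apply rpow_pos; lra).
  exists (gamma * rpow A (q - 1) / (q * rpow anew q)). split.
  - apply (Rmult_le_reg_r (q * rpow anew q)); [apply Rmult_lt_0_compat; lra|].
    unfold Rdiv. rewrite Rmult_assoc, Rinv_l by (apply Rgt_not_eq, Rmult_lt_0_compat; lra). lra.
  - unfold Rdiv. rewrite rpow_mult_base, rpow_inv_base by (try lra; left; apply Rinv_0_lt_compat; lra).
    replace (rpow A q) with (rpow A (q - 1) * A)
      by (rewrite <- (rpow_1 A) at 2 by lra; rewrite <- rpow_plus_exp by lra; f_equal; ring).
    field. repeat split; lra.
Qed.

(** Apply [step_x] at [u = anew/A y + Aprev/A xprev]; then [u - xh] is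
    [anew/A (y - zprev)], and convexity of [g] and [l] distributes the rest. *)
Lemma one_step (Hgc : convex_fun g) (beta gamma : R) (xprev zprev xnew : Vec d) (Aprev anew c : R) :
  0 < beta -> 0 < gamma -> 2 <= INR p + nu ->
  unif_convex N (INR p + nu) beta (fun y => / (INR p + nu) * rpow (N y) (INR p + nu)) ->
  0 <= Aprev -> 0 < anew -> 0 < c ->
  L <= c * (INR p + nu) * c_q beta (INR p + nu) ->
  c * (INR p + nu) * rpow anew (INR p + nu) <= gamma * rpow (Aprev + anew) (INR p + nu - 1) ->
  dom xprev -> dom xnew ->
  (forall y, dom y ->
     let xh := vadd (vscale (anew / (Aprev + anew)) zprev) (vscale (Aprev / (Aprev + anew)) xprev) in
     Phi p g D xh xnew + l xnew + c * rpow (N (vsub xnew xh)) (INR p + nu)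
     <= Phi p g D xh y + l y + c * rpow (N (vsub y xh)) (INR p + nu)) ->
  forall y, dom y ->
    (Aprev + anew) * (g xnew + l xnew)
    <= Aprev * (g xprev + l xprev) + gamma / (INR p + nu) * rpow (N (vsub y zprev)) (INR p + nu)
       + anew * (g xnew + D 1%nat xnew (vsub y xnew :: nil) + l y).
Proof.
  intros Hb Hgam Hq2 Hunif HAp Han Hc HcL HcK Hxp Hxn Hopt y Hy.
  destruct (step_prox_coeff (INR p + nu) gamma c Aprev anew ltac:(lra) HAp Han HcK) as [K [HK Kt]].
  set (q := INR p + nu) in *. set (A := Aprev + anew) in *. set (t := anew / A) in *.
  set (xh := vadd (vscale (anew / A) zprev) (vscale (Aprev / A) xprev)) in Hopt.
  assert (HA : 0 < A) by (unfold A; lra).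
  assert (Ht : 0 <= t <= 1).
  { unfold t. split; [apply Rdiv_nonneg; lra|].
    apply (Rmult_le_reg_r A); [lra|]. unfold Rdiv. rewrite Rmult_assoc, Rinv_l by lra. unfold A; lra. }
  set (u := vadd (vscale t y) (vscale (1 - t) xprev)).
  destruct (Hlc y xprev t Hy Hxp Ht) as [Hdu Hlu]. fold u in Hdu, Hlu.
  pose proof (step_x beta xh xnew c K Hb Hq2 Hunif Hc HcL HK Hxn Hopt u Hdu) as Hstep.
  fold q in Hstep.
  pose proof (grad_ineq p g D Hgc Hder Hp xnew xprev) as Hgconv.
  assert (HDu : D 1%nat xnew (vsub u xnew :: nil)
                = t * D 1%nat xnew (vsub y xnew :: nil) + (1 - t) * D 1%nat xnew (vsub xprev xnew :: nil)).
  { rewrite <- (D1_linear p g D Hder Hp). f_equal. f_equal. apply vext; intro; unfold u, vsub, vadd, vscale; ring. }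
  assert (Hxh : vsub u xh = vscale t (vsub y zprev)).
  { apply vext; intro j. unfold u, xh, t, vsub, vadd, vscale. unfold A. field. lra. }
  rewrite Hxh, N_scale, Rabs_right, rpow_mult_base in Hstep by (try apply N_nonneg; auto; lra).
  set (Ry := rpow (N (vsub y zprev)) q) in *.
  assert (Et : A * t = anew) by (unfold t; field; lra).
  assert (Et2 : A * (1 - t) = Aprev) by (unfold t, A; field; lra).
  assert (M1 : A * l xnew <= A * (D 1%nat xnew (vsub u xnew :: nil) + l u + K * (rpow t q * Ry)))
    by (apply Rmult_le_compat_l; lra).
  assert (M2 : A * l u <= A * (t * l y + (1 - t) * l xprev)) by (apply Rmult_le_compat_l; lra).
  assert (M3 : Aprev * (g xnew + D 1%nat xnew (vsub xprev xnew :: nil)) <= Aprev * g xprev)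
    by (apply Rmult_le_compat_l; lra).
  rewrite HDu in M1.
  replace (A * (t * D 1%nat xnew (vsub y xnew :: nil) + (1 - t) * D 1%nat xnew (vsub xprev xnew :: nil)
                + l u + K * (rpow t q * Ry)))
    with ((A * t) * D 1%nat xnew (vsub y xnew :: nil) + (A * (1 - t)) * D 1%nat xnew (vsub xprev xnew :: nil)
          + A * l u + (A * K * rpow t q) * Ry) in M1 by ring.
  replace (A * (t * l y + (1 - t) * l xprev)) with ((A * t) * l y + (A * (1 - t)) * l xprev) in M2 by ring.
  rewrite Et, Et2, Kt in M1. rewrite Et, Et2 in M2.
  replace (A * (g xnew + l xnew)) with ((Aprev + anew) * g xnew + A * l xnew) by (unfold A; ring).
  lra.
Qed.

End RegularizedStep.

(** ** The estimate sequence *)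

(** Estimate function [Psi_n(y) = sum_(j=1)^n a_j fhat(x_j; y) + h(y)] with
    [fhat(x; y) = g x + g'(x)(y - x) + l y]; here split as the linear-model
    sum and the prox term [h]. *)
Definition model_sum {d} (g : Vec d -> R) (D : nat -> Vec d -> list (Vec d) -> R) (l : Vec d -> R)
  (a : nat -> R) (x : nat -> Vec d) (n : nat) (y : Vec d) : R :=
  sumR n (fun j => a (S j) * (g (x (S j)) + D 1%nat (x (S j)) (vsub y (x (S j)) :: nil) + l y)).

Section EstimateSequence.
Context {d : nat} (N : Vec d -> R) (HN : is_norm N) (p : nat) (nu L : R)
  (g : Vec d -> R) (D : nat -> Vec d -> list (Vec d) -> R)
  (Hder : derivs_of p g D) (Hhol : holder_pth N p nu L D) (Hp : (1 <= p)%nat) (Hnu : 0 <= nu)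
  (HL : 0 < L) (Hgc : convex_fun g) (dom : Vec d -> Prop) (l : Vec d -> R) (Hlc : convex_on dom l)
  (beta gamma : R) (Hb : 0 < beta) (Hgam : 0 < gamma).

Local Notation q := (INR p + nu).

Context (Hq2 : 2 <= q) (Hunif : unif_convex N q beta (fun y => / q * rpow (N y) q))
  (h : Vec d -> R) (x0 : Vec d) (Hhc : convex_fun h) (Hhu : unif_convex N q gamma h)
  (Hh0 : forall y, 0 <= h y) (Hhx0 : h x0 = 0) (Hdx0 : dom x0)
  (a : nat -> R) (Ha : forall i, (1 <= i)%nat -> 0 < a i)
  (x z : nat -> Vec d) (c : nat -> R) (Hz0 : z O = x0) (Hx0 : x O = x0).

Local Notation A := (Asum a).
Local Notation xhat i :=
  (vadd (vscale (a i / A i) (z (i - 1)%nat)) (vscale (A (i - 1)%nat / A i) (x (i - 1)%nat))).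

(** The regularization coefficients lie in the window required by
    [one_step], and [x_i], [z_i] are the minimizers defining the method. *)
Context
  (Hcoef : forall i, (1 <= i)%nat ->
     0 < c i /\ L <= c i * q * c_q beta q /\ c i * q * rpow (a i) q <= gamma * rpow (A i) (q - 1))
  (Hxi : forall i, (1 <= i)%nat -> dom (x i) /\
     forall y, dom y ->
       Phi p g D (xhat i) (x i) + l (x i) + c i * rpow (N (vsub (x i) (xhat i))) q
       <= Phi p g D (xhat i) y + l y + c i * rpow (N (vsub y (xhat i))) q)
  (Hzi : forall i, (1 <= i)%nat -> dom (z i) /\
     forall y, dom y ->
       sum_f 1 i (fun j => a j * (g (x j) + D 1%nat (x j) (vsub (z i) (x j) :: nil) + l (z i))) + h (z i)
       <= sum_f 1 i (fun j => a j * (g (x j) + D 1%nat (x j) (vsub y (x j) :: nil) + l y)) + h y).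

Lemma dom_x i : dom (x i).
Proof. destruct i as [|i]; [rewrite Hx0; exact Hdx0|]. apply (Hxi (S i) ltac:(lia)). Qed.
(** The model sum is convex on [dom]: a nonnegative combination of affine
    functions plus multiples of [l]. *)
Lemma model_sum_convex n : convex_on dom (model_sum g D l a x n).
Proof.
  intros y1 y2 t Hy1 Hy2 Ht. destruct (Hlc y1 y2 t Hy1 Hy2 Ht) as [Hd Hl]. split; [exact Hd|].
  induction n as [|n IH]; unfold model_sum in *; simpl sumR; [lra|].
  set (X := x (S n)).
  replace (vsub (vadd (vscale t y1) (vscale (1 - t) y2)) X)
    with (vadd (vscale t (vsub y1 X)) (vscale (1 - t) (vsub y2 X)))
    by (apply vext; intro; unfold vsub, vadd, vscale; ring).
  rewrite (D1_linear p g D Hder Hp).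
  pose proof (Ha (S n) ltac:(lia)) as Han.
  assert (Hm : a (S n) * l (vadd (vscale t y1) (vscale (1 - t) y2)) <= a (S n) * (t * l y1 + (1 - t) * l y2))
    by (apply Rmult_le_compat_l; lra).
  nra.
Qed.

(** Each linear model minorizes [f = g + l], so [model_sum n y <= A_n f(y)]. *)
Lemma model_sum_le n y : model_sum g D l a x n y <= A n * (g y + l y).
Proof.
  induction n as [|n IH]; unfold model_sum in *; simpl sumR; simpl Asum; [lra|].
  pose proof (grad_ineq p g D Hgc Hder Hp (x (S n)) y).
  pose proof (Ha (S n) ltac:(lia)).
  assert (a (S n) * (g (x (S n)) + D 1%nat (x (S n)) (vsub y (x (S n)) :: nil) + l y)
          <= a (S n) * (g y + l y)) by (apply Rmult_le_compat_l; lra).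
  lra.
Qed.

Lemma estimate_invariant i : forall y, dom y ->
  A i * (g (x i) + l (x i)) + gamma / q * rpow (N (vsub y (z i))) q <= model_sum g D l a x i y + h y.
Proof.
  induction i as [|i IH]; intros y Hy.
  - pose proof (unif_convex_min d N q gamma dom (fun _ => 0) h x0 Hhc Hhu) as U.
    assert (Uc : convex_on dom (fun _ : Vec d => 0))
      by (intros y1 y2 t Hy1 Hy2 Ht; destruct (Hlc y1 y2 t Hy1 Hy2 Ht) as [Hd _]; split; [exact Hd|lra]).
    specialize (U Uc Hdx0 ltac:(intros y0 Hy0; pose proof (Hh0 y0); lra) y Hy).
    rewrite Hz0. unfold model_sum. simpl. lra.
  - destruct (Hzi (S i) ltac:(lia)) as [Hdz Hzmin].
    destruct (Hcoef (S i) ltac:(lia)) as [Hc [HcL HcK]].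
    destruct (Hxi (S i) ltac:(lia)) as [Hdx Hopt].
    replace (S i - 1)%nat with i in Hopt by lia.
    (* one step of the method, tested at the new estimate minimizer [z_(i+1)] *)
    pose proof (one_step N HN p nu L g D Hder Hhol Hp Hnu HL dom l Hlc Hgc beta gamma
                  (x i) (z i) (x (S i)) (A i) (a (S i)) (c (S i)) Hb Hgam Hq2 Hunif
                  (Asum_nonneg a i Ha) (Ha (S i) ltac:(lia)) Hc HcL HcK (dom_x i) Hdx Hopt
                  (z (S i)) Hdz) as Hstep.
    specialize (IH (z (S i)) Hdz).
    (* uniform convexity of [Psi_(i+1)] around its minimizer [z_(i+1)] *)
    assert (Hmin : forall y, dom y -> model_sum g D l a x (S i) (z (S i)) + h (z (S i))
                                     <= model_sum g D l a x (S i) y + h y)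
      by (intros y0 Hy0; specialize (Hzmin y0 Hy0); rewrite !sum_f_1 in Hzmin; exact Hzmin).
    pose proof (unif_convex_min d N q gamma dom _ h (z (S i)) Hhc Hhu (model_sum_convex (S i)) Hdz Hmin y Hy) as U.
    unfold model_sum in *. simpl sumR in *. simpl Asum.
    lra.
Qed.

Lemma estimate_rate (xstar : Vec d) k : dom xstar -> (1 <= k)%nat ->
  g (x k) + l (x k) - (g xstar + l xstar) <= h xstar / A k.
Proof.
  intros Hxs Hk.
  pose proof (estimate_invariant k xstar Hxs) as Hinv.
  pose proof (model_sum_le k xstar).
  pose proof (rpow_nonneg (N (vsub xstar (z k))) q).
  assert (HAk : 0 < A k) by (apply Asum_pos; auto).
  assert (0 <= gamma / q) by (apply Rdiv_nonneg; lra).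
  apply (Rmult_le_reg_l (A k)); [lra|].
  replace (A k * (h xstar / A k)) with (h xstar) by (field; lra).
  nra.
Qed.

End EstimateSequence.

(** ** Parameter choices of Theorem 10 *)

Lemma reg_coeff_window L lam theta2 alpha cq q :
  0 < L -> 0 < lam -> 0 < theta2 <= 1 -> L * lam <= theta2 -> 0 <= alpha <= 1 -> 0 < cq -> 0 < q ->
  let c := rpow L alpha / (cq * rpow lam (1 - alpha) * rpow theta2 alpha * q) in
  0 < c /\ L <= c * q * cq /\ c * q * cq * lam <= 1.
Proof.
  intros HL Hlam Hth Hth2 Hal Hcq Hq c.
  assert (HLa : 0 < rpow L alpha) by (apply rpow_pos; lra).
  assert (HP : 0 < rpow lam (1 - alpha) * rpow theta2 alpha)
    by (apply Rmult_lt_0_compat; apply rpow_pos; lra).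
  assert (Ec : c * q * cq = rpow L alpha / (rpow lam (1 - alpha) * rpow theta2 alpha))
    by (unfold c; field; repeat split; apply Rgt_not_eq; try apply rpow_pos; lra).
  assert (Hc : 0 < c)
    by (unfold c; apply Rdiv_lt_0_compat; [lra|]; repeat apply Rmult_lt_0_compat; try apply rpow_pos; lra).
  split; [exact Hc|]. rewrite Ec. split.
  - (* [L^(1-alpha) lambda^(1-alpha) theta2^alpha = (L lambda)^(1-alpha) theta2^alpha <= 1] *)
    assert (I1 : rpow L (1 - alpha) * rpow lam (1 - alpha) <= 1)
      by (rewrite <- rpow_mult_base by lra; apply rpow_le_one; nra).
    assert (I2 : rpow theta2 alpha <= 1) by (apply rpow_le_one; lra).
    apply (Rmult_le_reg_r (rpow lam (1 - alpha) * rpow theta2 alpha)); [exact HP|].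
    unfold Rdiv. rewrite Rmult_assoc, Rinv_l, Rmult_1_r by lra.
    rewrite (rpow_split L alpha) at 1 by lra.
    assert (0 <= rpow L (1 - alpha) * rpow lam (1 - alpha)) by (apply Rmult_le_pos; apply rpow_nonneg).
    assert (0 <= rpow theta2 alpha) by apply rpow_nonneg.
    replace (rpow L alpha * rpow L (1 - alpha) * (rpow lam (1 - alpha) * rpow theta2 alpha))
      with (rpow L alpha * ((rpow L (1 - alpha) * rpow lam (1 - alpha)) * rpow theta2 alpha)) by ring.
    rewrite <- (Rmult_1_r (rpow L alpha)) at 2. apply Rmult_le_compat_l; [lra|]. nra.
  - (* [L^alpha lambda^alpha = (L lambda)^alpha <= theta2^alpha] *)
    assert (I : rpow L alpha * rpow lam alpha <= rpow theta2 alpha)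
      by (rewrite <- rpow_mult_base by lra; apply rpow_le_base; nra).
    apply (Rmult_le_reg_r (rpow lam (1 - alpha) * rpow theta2 alpha)); [exact HP|].
    replace (rpow L alpha / (rpow lam (1 - alpha) * rpow theta2 alpha) * lam
             * (rpow lam (1 - alpha) * rpow theta2 alpha))
      with (rpow L alpha * lam) by (field; split; apply Rgt_not_eq, rpow_pos; lra).
    rewrite (rpow_split lam alpha) at 1 by lra.
    pose proof (rpow_pos lam (1 - alpha) Hlam). nra.
Qed.

(** With [lambda_i = a_i^q / (c_q gamma A_i^(q-1))] the window of
    [reg_coeff_window] becomes the window of [one_step]:
    [c q a_i^q <= gamma A_i^(q-1)] is [c q c_q lambda_i <= 1]. *)
Lemma step_coeff_window L theta2 alpha cq gamma q ai Ai :
  0 < L -> 0 < cq -> 0 < gamma -> 0 < q -> 0 < ai -> 0 < Ai -> 0 <= alpha <= 1 -> 0 < theta2 <= 1 ->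
  L * (rpow ai q / (cq * gamma * rpow Ai (q - 1))) <= theta2 ->
  let c := rpow L alpha
           / (cq * rpow (rpow ai q / (cq * gamma * rpow Ai (q - 1))) (1 - alpha) * rpow theta2 alpha * q) in
  0 < c /\ L <= c * q * cq /\ c * q * rpow ai q <= gamma * rpow Ai (q - 1).
Proof.
  intros HL Hcq Hg Hq Hai HA Hal Hth Hlam c.
  assert (HP : 0 < cq * gamma * rpow Ai (q - 1)) by (apply Rmult_lt_0_compat; [nra|apply rpow_pos; lra]).
  assert (Hl : 0 < rpow ai q / (cq * gamma * rpow Ai (q - 1))) by (apply Rdiv_lt_0_compat; [apply rpow_pos|]; lra).
  destruct (reg_coeff_window L _ theta2 alpha cq q HL Hl Hth Hlam Hal Hcq Hq) as [Hc [HcL H]].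
  fold c in Hc, HcL, H.
  split; [exact Hc|split; [exact HcL|]].
  apply (Rmult_le_compat_r (cq * gamma * rpow Ai (q - 1))) in H; [|lra].
  replace (c * q * cq * (rpow ai q / (cq * gamma * rpow Ai (q - 1))) * (cq * gamma * rpow Ai (q - 1)))
    with (cq * (c * q * rpow ai q)) in H
    by (field; repeat split; apply Rgt_not_eq; try apply rpow_pos; lra).
  nra.
Qed.

(** The lower bound [theta1 <= L lambda_i] is the growth condition
    [C A_i^(q-1) <= a_i^q] of [A_bound] with [C = theta1 c_q gamma / L]. *)
Lemma lam_growth theta1 L q cq gamma ai Ai :
  0 < L -> 0 < cq -> 0 < gamma -> 0 < Ai ->
  theta1 <= L * (rpow ai q / (cq * gamma * rpow Ai (q - 1))) ->
  theta1 * cq * gamma / L * rpow Ai (q - 1) <= rpow ai q.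
Proof.
  intros HL Hcq Hg HA H.
  assert (HP : 0 < cq * gamma * rpow Ai (q - 1)) by (apply Rmult_lt_0_compat; [nra|apply rpow_pos; lra]).
  apply (Rmult_le_compat_r (cq * gamma * rpow Ai (q - 1) / L)) in H; [|apply Rdiv_nonneg; lra].
  replace (L * (rpow ai q / (cq * gamma * rpow Ai (q - 1))) * (cq * gamma * rpow Ai (q - 1) / L))
    with (rpow ai q) in H by (field; repeat split; apply Rgt_not_eq; try apply rpow_pos; lra).
  eapply Rle_trans; [|exact H]. right. field. lra.
Qed.

Lemma rate_from_growth H Ak Cn Cd q k :
  0 <= H -> 0 < Cn -> 0 < Cd -> 0 < q -> (1 <= k)%nat ->
  Ak >= Cn / Cd * rpow (INR k / q) q ->
  H / Ak <= Cd / Cn * H * rpow (q / INR k) q.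
Proof.
  intros HH HCn HCd Hq Hk HAk.
  assert (Hkq : 0 < INR k / q) by (apply Rdiv_lt_0_compat; [apply lt_0_INR; lia|lra]).
  assert (HX : 0 < rpow (INR k / q) q) by (apply rpow_pos; lra).
  assert (HC : 0 < Cn / Cd * rpow (INR k / q) q) by (apply Rmult_lt_0_compat; [apply Rdiv_lt_0_compat|]; lra).
  replace (q / INR k) with (/ (INR k / q)) by (field; split; [apply not_0_INR; lia|lra]).
  rewrite rpow_inv_base by lra.
  apply Rle_trans with (H / (Cn / Cd * rpow (INR k / q) q)).
  - unfold Rdiv at 1 2. apply Rmult_le_compat_l; [lra|]. apply Rinv_le_contravar; lra.
  - right. field. repeat split; lra.
Qed.

Theorem mainTheorem10
  (d : nat) (N : Vec d -> R)
  (p : nat) (nu L : R)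
  (g : Vec d -> R) (D : nat -> Vec d -> list (Vec d) -> R)
  (dom : Vec d -> Prop) (l : Vec d -> R)
  (xstar x0 : Vec d)
  (gamma beta alpha theta1 theta2 : R)
  (h : Vec d -> R)
  (a : nat -> R) (x z : nat -> Vec d) :
  let q := INR p + nu in
  let cq := c_q beta q in
  let A := Asum a in
  let lam := fun i => rpow (a i) q / (cq * gamma * rpow (A i) (q - 1)) in
  let f := fun y => g y + l y in
  (* x^_{i-1} *)
  let xhat := fun i => vadd (vscale (a i / A i) (z (i - 1)%nat))
                            (vscale (A (i - 1)%nat / A i) (x (i - 1)%nat)) in
  let ftilde := fun y u => Phi p g D y u + l u in
  let fhat := fun y u => g y + D 1%nat y (vsub u y :: nil) + l u in
  is_norm N ->
  (1 <= p)%nat -> 0 <= nu <= 1 -> 2 <= q -> 0 < L ->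
  convex_fun g -> derivs_of p g D -> holder_pth N p nu L D ->
  proper_closed_convex N dom l ->
  (* x* minimizes f *)
  dom xstar -> (forall y, dom y -> f xstar <= f y) ->
  0 < gamma -> 0 < beta ->
  unif_convex N q beta (fun y => / q * rpow (N y) q) ->
  dom x0 ->
  convex_fun h -> (forall y, 0 <= h y) -> (forall y, h y = 0 <-> y = x0) ->
  unif_convex N q gamma h ->
  0 <= alpha <= 1 ->
  (forall i, (1 <= i)%nat -> 0 < a i) ->
  z O = x0 -> x O = x0 ->
  (* x_i minimizes ftilde(.; x^_{i-1}) + L^alpha/(cq lam_i^(1-alpha) theta2^alpha q) ||. - x^_{i-1}||^q *)
  (forall i, (1 <= i)%nat ->
     dom (x i) /\
     forall y, dom y ->
       ftilde (xhat i) (x i)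
         + rpow L alpha / (cq * rpow (lam i) (1 - alpha) * rpow theta2 alpha * q)
           * rpow (N (vsub (x i) (xhat i))) q
       <= ftilde (xhat i) y
         + rpow L alpha / (cq * rpow (lam i) (1 - alpha) * rpow theta2 alpha * q)
           * rpow (N (vsub y (xhat i))) q) ->
  (* z_i minimizes sum_{j=1}^i a_j fhat(.; x_j) + h(.) *)
  (forall i, (1 <= i)%nat ->
     dom (z i) /\
     forall y, dom y ->
       sum_f 1 i (fun j => a j * fhat (x j) (z i)) + h (z i)
       <= sum_f 1 i (fun j => a j * fhat (x j) y) + h y) ->
  theta1 <= theta2 ->
  (forall i, (1 <= i)%nat -> 0 < theta1 /\ theta1 <= L * lam i /\ L * lam i <= theta2 /\ theta2 <= 1) ->
  forall k, (1 <= k)%nat ->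
    A k >= theta1 * cq * gamma / L * rpow (INR k / q) q /\
    f (x k) - f xstar <= h xstar / A k /\
    h xstar / A k <= L / (theta1 * cq * gamma) * h xstar * rpow (q / INR k) q.
Proof.
  intros q cq A lam f xhat ftilde fhat HN Hp Hnu Hq2 HL Hgc Hder Hhol Hlc Hxs _ Hgam Hb Hunif Hdx0
    Hhc Hh0 Hh0iff Hhu Halpha Ha Hz0 Hx0 Hxi Hzi _ Hth k Hk.
  assert (Hcq : 0 < cq) by (apply c_q_pos; lra).
  assert (HA : forall i, (1 <= i)%nat -> 0 < A i) by (intros; apply Asum_pos; auto).
  destruct (Hth 1%nat (le_n _)) as [Ht1 _].
  (* the prescribed regularization coefficients lie in the window of [one_step] *)
  set (c := fun i => rpow L alpha / (cq * rpow (lam i) (1 - alpha) * rpow theta2 alpha * q)).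
  assert (Hcoef : forall i, (1 <= i)%nat ->
            0 < c i /\ L <= c i * q * cq /\ c i * q * rpow (a i) q <= gamma * rpow (A i) (q - 1)).
  { intros i Hi. destruct (Hth i Hi) as [Ht1i [Hlo [Hhi Ht2]]].
    apply step_coeff_window; auto; lra. }
  assert (HC : 0 < theta1 * cq * gamma / L)
    by (apply Rdiv_lt_0_compat; [repeat apply Rmult_lt_0_compat|]; lra).
  pose proof (A_bound a q _ ltac:(lra) HC Ha
                (fun i Hi => lam_growth theta1 L q cq gamma (a i) (A i) HL Hcq Hgam (HA i Hi)
                               (proj1 (proj2 (Hth i Hi)))) k) as Hgrowth.
  pose proof (estimate_rate N HN p nu L g D Hder Hhol Hp (proj1 Hnu) HL Hgc dom l (proj1 (proj2 Hlc))
                beta gamma Hb Hgam Hq2 Hunif h x0 Hhc Hhu Hh0 (proj2 (Hh0iff x0) eq_refl) Hdx0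
                a Ha x z c Hz0 Hx0 Hcoef Hxi Hzi xstar k Hxs Hk) as Hrate.
  split; [exact Hgrowth|]. split; [exact Hrate|].
  apply rate_from_growth; auto; [repeat apply Rmult_lt_0_compat|]; lra.
Qed.
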